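(* Let $k\geq 2$ and consider the $\mathrm{SU}(2)_k$ anyon theory. Fix a charge $\mathfrak{j}$ with $0<\mathfrak{j}<k/2$, a total charge $J\in\mathcal{S}$, and $f\in(0,1)$. Consider system sizes $L\to\infty$ along a sequence for which $L_A=fL$ is an integer, $L_B=L-L_A$, and $D_J(L)>0$ (i.e. $2\mathfrak{j}L+2J$ is even). Let $\langle\tilde S_A\rangle_J$ be the Haar average of the anyonic entanglement entropy over unit vectors in $\mathcal{H}^J$, given by $\langle\tilde S_A\rangle_J=\sum_\alpha\varrho_\alpha\varphi_\alpha$ as in the context. Then, as $L\to\infty$, $$\langle\tilde S_A\rangle_J=\begin{cases} fL\log(d_\mathfrak{j})-\frac{1}{2d_J}\delta_{f,\frac12}+o(1), & f\le\frac12,\\[2pt] (1-f)L\log(d_\mathfrak{j})+\log(d_J)+o(1), & f>\frac12,\end{cases}$$ where $\delta_{f,1/2}=1$ if $f=1/2$ and $0$ otherwise.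
   Context: $\mathrm{SU}(2)_k$: charges $\mathcal{S}=\{0,\tfrac12,1,\dots,\tfrac k2\}$, all self-dual, with multiplicity-free fusion $j_1\otimes j_2=\bigoplus_{j=|j_1-j_2|}^{\min(j_1+j_2,\,k-j_1-j_2)}j$ (in integer steps), i.e. $N^{c}_{ab}=1$ for those $c$ and $0$ otherwise. Modular $S$-matrix $S_{ab}=\sqrt{\tfrac{2}{k+2}}\sin\!\big(\tfrac{(2a+1)(2b+1)\pi}{k+2}\big)$; quantum dimensions $d_a=S_{a0}/S_{00}=\sin\!\big(\tfrac{(2a+1)\pi}{k+2}\big)/\sin\!\big(\tfrac{\pi}{k+2}\big)$. $D_c(n)$ is the number of fusion paths of $n$ anyons of charge $\mathfrak{j}$ to total charge $c$: $\sum_{x_2,\dots,x_{n-1}}N^{x_2}_{\mathfrak{j}\mathfrak{j}}N^{x_3}_{x_2\mathfrak{j}}\cdots N^{c}_{x_{n-1}\mathfrak{j}}$, and $\mathcal{H}^J$ is the fusion space of $L$ such anyons with total charge $J$, of dimension $D_J=D_J(L)$. With $m_\alpha=D_\alpha(L_A)$, $n_\alpha=\sum_{\beta:N^J_{\alpha\beta}=1}D_\beta(L_B)$ (so $\mathcal{H}^J\cong\bigoplus_\alpha\mathbb{C}^{m_\alpha}\otimes\mathbb{C}^{n_\alpha}$), the Haar-averaged anyonic entanglement entropy is $\langle\tilde S_A\rangle_J=\sum_{\alpha: m_\alpha n_\alpha>0}\varrho_\alpha\varphi_\alpha$ with $\varrho_\alpha=m_\alpha n_\alpha/D_J$ and $\varphi_\alpha=\Psi(D_J+1)-\Psi(\max(m_\alpha,n_\alpha)+1)-\min\!\big(\frac{m_\alpha-1}{2n_\alpha},\frac{n_\alpha-1}{2m_\alpha}\big)+\log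 d_\alpha$ ($\Psi$ the digamma function). Here the anyonic entanglement entropy of a unit vector $\Psi=\bigoplus_\alpha\Psi_\alpha$ is $-\sum_\alpha p_\alpha\log p_\alpha+\sum_\alpha p_\alpha(-\sum_i\lambda_{\alpha,i}\log\lambda_{\alpha,i}+\log d_\alpha)$, where $p_\alpha=\|\Psi_\alpha\|^2$ and $\lambda_{\alpha,i}$ are the eigenvalues of $\mathrm{tr}_{\mathbb{C}^{n_\alpha}}(\Psi_\alpha\Psi_\alpha^\dagger)/p_\alpha$. *)

From Stdlib Require Import Reals List Arith.
From Coquelicot Require Import Coquelicot.
Open Scope R_scope.

(* Charges of SU(2)_k are encoded by twice their spin: a spin j is the
   natural number 2j, with 0 <= 2j <= k. *)

Definition fusionN (k a b c : nat) : bool :=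
  Nat.leb (Nat.max a b - Nat.min a b) c &&
  Nat.leb c (Nat.min (a + b) (2 * k - (a + b))) &&
  Nat.even (a + b + c) &&
  Nat.leb a k && Nat.leb b k && Nat.leb c k.

Definition natsum (f : nat -> nat) (n : nat) : nat :=
  fold_right Nat.add 0%nat (map f (seq 0 n)).

Definition Rsum (f : nat -> R) (n : nat) : R :=
  fold_right Rplus 0 (map f (seq 0 n)).

(* Dpaths k jj n c = D_c(n): number of fusion paths of n anyons of (doubled)
   charge jj to total (doubled) charge c. *)
Fixpoint Dpaths (k jj n c : nat) : nat :=
  match n with
  | O => if Nat.eqb c 0 then 1%nat else 0%nat
  | S n' => natsum (fun x => if fusionN k x jj c then Dpaths k jj n' x else 0%nat) (S k)
  end.

Definition qdim (k a : nat) : R :=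
  sin (INR (a + 1) * PI / INR (k + 2)) / sin (PI / INR (k + 2)).

Definition harmonic (n : nat) : R :=
  fold_right Rplus 0 (map (fun i => / INR i) (seq 1 n)).

Definition euler_gamma : R :=
  real (Lim_seq (fun n => harmonic n - ln (INR n))).

Definition digamma_nat (n : nat) : R := harmonic (n - 1) - euler_gamma.

Definition m_alpha (k jj LA alpha : nat) : nat := Dpaths k jj LA alpha.

Definition n_alpha (k jj JJ LB alpha : nat) : nat :=
  natsum (fun beta => if fusionN k alpha beta JJ then Dpaths k jj LB beta else 0%nat) (S k).

Definition avgEntropy (k jj JJ L LA : nat) : R :=
  let LB := (L - LA)%nat in
  let DJ := Dpaths k jj L JJ in
  Rsum (fun alpha =>
    let m := m_alpha k jj LA alpha in
    let n := n_alpha k jj JJ LB alpha in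
    if Nat.ltb 0 (m * n) then
      (INR m * INR n / INR DJ) *
      (digamma_nat (DJ + 1) - digamma_nat (Nat.max m n + 1)
       - Rmin ((INR m - 1) / (2 * INR n)) ((INR n - 1) / (2 * INR m))
       + ln (qdim k alpha))
    else 0) (S k).

Definition mainTerm (k jj JJ L : nat) (f : R) : R :=
  if Rle_dec f (1/2) then
    f * INR L * ln (qdim k jj)
    - (if Req_EM_T f (1/2) then 1 / (2 * qdim k JJ) else 0)
  else (1 - f) * INR L * ln (qdim k jj) + ln (qdim k JJ).

From Stdlib Require Import Reals Lra Lia Arith List.
From Coquelicot Require Import Coquelicot.
Open Scope R_scope.

(* The fusion rules of SU(2)_k are diagonalised by the S-matrix (Verlinde formula), so
   m_alpha, n_alpha and D_J are sums over the columns b of S_{0b} S_{cb} lambda_b^n with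
   lambda_b = S_{jb} / S_{0b}.  For 0 < j < k/2 the eigenvalues lambda_0 = d_j and
   lambda_k = +-d_j strictly dominate all the others, and the parity of nonvanishing path
   counts makes the two extreme columns add up.  Hence m_alpha, n_alpha and D_J are
   d_j^{L_A}, d_j^{L_B} and d_j^L times constants related through d_alpha and d_J, up to
   relative errors o(1).  As Psi(D + 1) - Psi(M + 1) = ln(D/M) + O(1/M), every phi_alpha
   tends to L_A ln d_j when L_B - L_A grows (the Page term m/(2n) vanishes), to
   L_B ln d_j + ln d_J when L_A - L_B grows, and to L_A ln d_j - 1/(2 d_J) when L_A = L_B
   (then m_alpha/n_alpha -> 1/d_J); the weights rho_alpha sum to 1. *)

(** * Finite sums *)

Lemma fold_right_Rplus_init (l : list R) (a : R) :
  fold_right Rplus a l = fold_right Rplus 0 l + a.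
Proof. induction l as [|x l IH]; simpl; [lra | rewrite IH; lra]. Qed.

Lemma Rsum_S f n : Rsum f (S n) = Rsum f n + f n.
Proof.
  unfold Rsum. rewrite seq_S, map_app, fold_right_app. simpl.
  rewrite fold_right_Rplus_init. lra.
Qed.

Lemma Rsum_ext f g n : (forall i, (i < n)%nat -> f i = g i) -> Rsum f n = Rsum g n.
Proof.
  induction n as [|n IH]; intros H; [reflexivity|].
  rewrite !Rsum_S, IH by (intros; apply H; lia). now rewrite H by lia.
Qed.

Lemma Rsum_plus f g n : Rsum (fun i => f i + g i) n = Rsum f n + Rsum g n.
Proof. induction n as [|n IH]; [unfold Rsum; simpl; lra | rewrite !Rsum_S, IH; lra]. Qed.

Lemma Rsum_minus f g n : Rsum (fun i => f i - g i) n = Rsum f n - Rsum g n.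
Proof. induction n as [|n IH]; [unfold Rsum; simpl; lra | rewrite !Rsum_S, IH; lra]. Qed.

Lemma Rsum_scal_l c f n : Rsum (fun i => c * f i) n = c * Rsum f n.
Proof. induction n as [|n IH]; [unfold Rsum; simpl; lra | rewrite !Rsum_S, IH; lra]. Qed.

Lemma Rsum_const c n : Rsum (fun _ => c) n = INR n * c.
Proof. induction n as [|n IH]; [unfold Rsum; simpl; lra | rewrite Rsum_S, IH, S_INR; lra]. Qed.

Lemma Rsum_zero n : Rsum (fun _ => 0) n = 0.
Proof. rewrite Rsum_const. lra. Qed.

Lemma Rsum_exchange (F : nat -> nat -> R) n m :
  Rsum (fun i => Rsum (fun j => F i j) m) n = Rsum (fun j => Rsum (fun i => F i j) n) m.
Proof.
  induction n as [|n IH].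
  - symmetry. apply Rsum_zero.
  - rewrite Rsum_S, IH, <- Rsum_plus. apply Rsum_ext. intros. now rewrite Rsum_S.
Qed.

Lemma Rsum_mult_Rsum f g n m :
  Rsum f n * Rsum g m = Rsum (fun i => Rsum (fun j => f i * g j) m) n.
Proof.
  induction n as [|n IH].
  - unfold Rsum; simpl; lra.
  - rewrite !Rsum_S, Rmult_plus_distr_r, IH, Rsum_scal_l. reflexivity.
Qed.

Lemma Rsum_eqb (a : nat -> R) j n : (j < n)%nat ->
  Rsum (fun i => if Nat.eqb i j then a i else 0) n = a j.
Proof.
  induction n as [|n IH]; intros Hj; [lia|].
  rewrite Rsum_S. destruct (Nat.eq_dec j n) as [->|Hne].
  - rewrite Nat.eqb_refl, (Rsum_ext _ (fun _ => 0)), Rsum_zero; [lra|].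
    intros i Hi. destruct (Nat.eqb_spec i n); [lia | reflexivity].
  - rewrite IH by lia. destruct (Nat.eqb_spec n j); [lia | lra].
Qed.

Lemma Rsum_le f g n : (forall i, (i < n)%nat -> f i <= g i) -> Rsum f n <= Rsum g n.
Proof.
  induction n as [|n IH]; intros H; [unfold Rsum; simpl; lra|].
  rewrite !Rsum_S. assert (f n <= g n) by (apply H; lia).
  assert (Rsum f n <= Rsum g n) by (apply IH; intros; apply H; lia). lra.
Qed.

Lemma Rabs_Rsum_le f n : Rabs (Rsum f n) <= Rsum (fun i => Rabs (f i)) n.
Proof.
  induction n as [|n IH]; [unfold Rsum; simpl; rewrite Rabs_R0; lra|].
  rewrite !Rsum_S. eapply Rle_trans; [apply Rabs_triang | lra].
Qed.

Lemma Rsum_term_le f n j : (j < n)%nat -> (forall i, (i < n)%nat -> 0 <= f i) ->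
  f j <= Rsum f n.
Proof.
  intros Hj H.
  rewrite <- (Rsum_eqb f j n Hj). apply Rsum_le. intros i Hi.
  destruct (Nat.eqb i j); [lra | now apply H].
Qed.

Lemma Rsum_lt f g n j : (j < n)%nat -> (forall i, (i < n)%nat -> f i <= g i) -> f j < g j ->
  Rsum f n < Rsum g n.
Proof.
  intros Hj H Hlt.
  assert (g j - f j <= Rsum (fun i => g i - f i) n).
  { apply (Rsum_term_le (fun i => g i - f i)); auto. intros i Hi. specialize (H i Hi). lra. }
  rewrite Rsum_minus in H0. lra.
Qed.

Lemma Rsum_eventually_small (g : nat -> nat -> R) m :
  (forall b, (b < m)%nat -> forall del, 0 < del ->
     exists N, forall n, (N <= n)%nat -> Rabs (g b n) <= del) ->
  forall del, 0 < del -> exists N, forall n, (N <= n)%nat -> Rabs (Rsum (fun b => g b n) m) <= del.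
Proof.
  induction m as [|m IH]; intros H del Hdel.
  - exists 0%nat. intros. unfold Rsum; simpl. rewrite Rabs_R0. lra.
  - destruct (IH (fun b Hb => H b (Nat.lt_lt_succ_r _ _ Hb)) (del/2)) as [N1 HN1]; [lra|].
    destruct (H m (Nat.lt_succ_diag_r m) (del/2)) as [N2 HN2]; [lra|].
    exists (Nat.max N1 N2). intros n Hn. rewrite Rsum_S.
    eapply Rle_trans; [apply Rabs_triang|].
    assert (Rabs (Rsum (fun b => g b n) m) <= del/2) by (apply HN1; lia).
    assert (Rabs (g m n) <= del/2) by (apply HN2; lia). lra.
Qed.

Lemma natsum_S f n : natsum f (S n) = (natsum f n + f n)%nat.
Proof.
  unfold natsum. rewrite seq_S, map_app, fold_right_app. simpl.
  induction (map f (seq 0 n)); simpl; lia.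
Qed.

Lemma INR_natsum f n : INR (natsum f n) = Rsum (fun i => INR (f i)) n.
Proof.
  induction n as [|n IH]; [reflexivity|].
  rewrite natsum_S, Rsum_S, plus_INR, IH. reflexivity.
Qed.

Lemma natsum_neq0 f m : natsum f m <> 0%nat -> exists x, (x < m)%nat /\ f x <> 0%nat.
Proof.
  induction m as [|m IH]; intros H; [unfold natsum in H; simpl in H; lia|].
  rewrite natsum_S in H. destruct (Nat.eq_dec (f m) 0) as [E|E].
  - destruct IH as [x [Hx Hf]]; [lia|]. exists x; split; auto.
  - exists m; split; auto.
Qed.

Lemma even_or_odd_double n :
  (exists m, n = (2 * m)%nat /\ Nat.even n = true) \/
  (exists m, n = (2 * m + 1)%nat /\ Nat.even n = false).
Proof.
  destruct (Nat.Even_or_Odd n) as [[m Hm]|[m Hm]].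
  - left. exists m. split; auto. apply Nat.even_spec. now exists m.
  - right. exists m. split; auto. subst. now rewrite Nat.add_comm, Nat.even_add_mul_2.
Qed.

Ltac case_parity e := destruct (even_or_odd_double e) as [[?m [? ->]]|[?m [? ->]]].

Lemma pow_m1_double j : (-1) ^ (2 * j) = 1.
Proof. rewrite pow_mult. replace ((-1) ^ 2) with 1 by ring. apply pow1. Qed.

Lemma pow_m1_even n : Nat.even n = true -> (-1) ^ n = 1.
Proof. intros [q ->]%Nat.even_spec. apply pow_m1_double. Qed.

(** * The S-matrix and the Verlinde formula *)

Ltac push_INR := rewrite ?plus_INR, ?mult_INR, ?S_INR, ?INR_0.

Definition theta (k : nat) : R := PI / INR (k + 2).

Definition smat (k a b : nat) : R := sin (INR (S a) * INR (S b) * theta k).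

Definition eig (k jj b : nat) : R := smat k jj b / smat k 0 b.

Definition verlinde (k jj a c n : nat) : R :=
  (2 / INR (k + 2)) * Rsum (fun b => smat k a b * smat k c b * eig k jj b ^ n) (S k).

Lemma INR_k2_pos k : 0 < INR (k + 2).
Proof. apply lt_0_INR; lia. Qed.

Lemma theta_pos k : 0 < theta k.
Proof. apply Rdiv_lt_0_compat; [apply PI_RGT_0 | apply INR_k2_pos]. Qed.

Lemma INR_mult_theta k : INR (k + 2) * theta k = PI.
Proof. unfold theta. field. apply not_0_INR. lia. Qed.

Lemma sin_nPI_minus m x : sin (INR m * PI - x) = - (-1) ^ m * sin x.
Proof.
  induction m as [|m IH].
  - simpl. replace (0 * PI - x) with (- x) by ring. rewrite sin_neg. ring.
  - rewrite S_INR. replace ((INR m + 1) * PI - x) with ((INR m * PI - x) + PI) by ring.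
    rewrite neg_sin, IH. simpl. ring.
Qed.

Lemma cos_nPI_minus m x : cos (INR m * PI - x) = (-1) ^ m * cos x.
Proof.
  induction m as [|m IH].
  - simpl. replace (0 * PI - x) with (- x) by ring. rewrite cos_neg. ring.
  - rewrite S_INR. replace ((INR m + 1) * PI - x) with ((INR m * PI - x) + PI) by ring.
    rewrite neg_cos, IH. simpl. ring.
Qed.

Lemma sin_mult_sin x y : sin x * sin y = (cos (x - y) - cos (x + y)) / 2.
Proof. rewrite cos_minus, cos_plus. field. Qed.

Lemma two_sin_mult_cos u v : 2 * sin u * cos v = sin (v + u) - sin (v - u).
Proof. rewrite sin_plus, sin_minus. ring. Qed.

Lemma Rsum_cos_telescope phi n :
  Rsum (fun b => 2 * sin (phi / 2) * cos (INR (S b) * phi)) n =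
  sin ((INR n + / 2) * phi) - sin (phi / 2).
Proof.
  induction n as [|n IH].
  - simpl. replace ((0 + / 2) * phi) with (phi / 2) by field. unfold Rsum; simpl. ring.
  - rewrite Rsum_S, IH, two_sin_mult_cos.
    replace (INR (S n) * phi - phi / 2) with ((INR n + / 2) * phi) by (rewrite S_INR; field).
    replace (INR (S n) * phi + phi / 2) with ((INR (S n) + / 2) * phi) by field.
    ring.
Qed.

Lemma Rsum_cos_mult_theta k m : (0 < m)%nat -> (m < 2 * (k + 2))%nat ->
  Rsum (fun b => cos (INR (S b) * (INR m * theta k))) (S k) = - (1 + (-1) ^ m) / 2.
Proof.
  intros Hm1 Hm2.
  set (phi := INR m * theta k).
  assert (Hs : 0 < sin (phi / 2)).
  { pose proof (theta_pos k). pose proof (INR_k2_pos k). pose proof PI_RGT_0.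
    assert (0 < INR m) by (apply lt_0_INR; lia).
    assert (INR m < 2 * INR (k + 2)) by (rewrite <- (mult_INR 2); apply lt_INR; lia).
    apply sin_gt_0; unfold phi.
    - apply Rdiv_lt_0_compat; [apply Rmult_lt_0_compat|]; lra.
    - unfold theta. apply (Rmult_lt_reg_r (2 * INR (k + 2))); [lra|].
      replace (INR m * (PI / INR (k + 2)) / 2 * (2 * INR (k + 2))) with (INR m * PI)
        by (field; lra).
      nra. }
  pose proof (Rsum_cos_telescope phi (S k)) as T.
  rewrite Rsum_scal_l in T.
  assert (E : (INR (S k) + / 2) * phi = INR m * PI - phi / 2).
  { unfold phi. rewrite <- (INR_mult_theta k), plus_INR, S_INR. simpl (INR 2). field. }
  rewrite E, sin_nPI_minus in T.
  apply (Rmult_eq_reg_l (2 * sin (phi / 2))); [rewrite T; field | lra].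
Qed.

Lemma smat_sym k a b : smat k a b = smat k b a.
Proof. unfold smat. f_equal. ring. Qed.

Lemma smat_orthogonal_le k a c : (a <= k)%nat -> (c <= a)%nat ->
  Rsum (fun b => smat k a b * smat k c b) (S k) = if Nat.eqb a c then INR (k + 2) / 2 else 0.
Proof.
  intros Ha Hca.
  rewrite (Rsum_ext _ (fun b => / 2 * (cos (INR (S b) * (INR (a - c) * theta k)) -
                                       cos (INR (S b) * (INR (a + c + 2) * theta k))))).
  2:{ intros b _. unfold smat. rewrite sin_mult_sin. unfold Rdiv. rewrite Rmult_comm.
      f_equal. f_equal; f_equal.
      - rewrite minus_INR by lia. push_INR. ring.
      - push_INR. simpl (INR 2). ring. }
  rewrite Rsum_scal_l, Rsum_minus, (Rsum_cos_mult_theta k (a + c + 2)) by lia.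
  destruct (Nat.eqb_spec a c) as [->|Hne].
  - rewrite Nat.sub_diag. simpl (INR 0).
    rewrite (Rsum_ext _ (fun _ => 1)), Rsum_const
      by (intros; rewrite Rmult_0_l, Rmult_0_r; apply cos_0).
    replace (c + c + 2)%nat with (2 * (c + 1))%nat by lia. rewrite pow_m1_double.
    push_INR. simpl (INR 2). field.
  - rewrite (Rsum_cos_mult_theta k (a - c)) by lia.
    replace (a + c + 2)%nat with ((a - c) + 2 * (c + 1))%nat by lia.
    rewrite pow_add, pow_m1_double. field.
Qed.

Lemma smat_orthogonal k a c : (a <= k)%nat -> (c <= k)%nat ->
  Rsum (fun b => smat k a b * smat k c b) (S k) = if Nat.eqb a c then INR (k + 2) / 2 else 0.
Proof.
  intros Ha Hc. destruct (le_lt_dec c a) as [H|H].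
  - now apply smat_orthogonal_le.
  - rewrite (Rsum_ext _ (fun b => smat k c b * smat k a b)) by (intros; ring).
    rewrite smat_orthogonal_le by lia.
    destruct (Nat.eqb_spec a c), (Nat.eqb_spec c a); auto; lia.
Qed.

Definition window (lo p x : nat) : bool :=
  Nat.leb lo x && Nat.leb x (lo + 2 * p) && Nat.even (x + lo).

Lemma window_0 lo x : window lo 0 x = Nat.eqb x lo.
Proof.
  unfold window.
  destruct (Nat.leb_spec lo x), (Nat.leb_spec x (lo + 2 * 0)), (Nat.eqb_spec x lo);
    case_parity (x + lo)%nat; simpl; auto; lia.
Qed.

Lemma window_S (g : nat -> R) lo p x :
  (if window lo (S p) x then g x else 0) =
  (if window lo p x then g x else 0) + (if Nat.eqb x (lo + 2 * p + 2) then g x else 0).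
Proof.
  unfold window.
  destruct (Nat.leb_spec lo x), (Nat.leb_spec x (lo + 2 * S p)), (Nat.leb_spec x (lo + 2 * p)),
    (Nat.eqb_spec x (lo + 2 * p + 2)); case_parity (x + lo)%nat; simpl; try lra; lia.
Qed.

Lemma Rsum_window_telescope (G : nat -> R) lo p n : (lo + 2 * p < n)%nat ->
  Rsum (fun x => if window lo p x then G x - G (x + 2)%nat else 0) n =
  G lo - G (lo + 2 * p + 2)%nat.
Proof.
  induction p as [|p IH]; intros Hn.
  - rewrite (Rsum_ext _ (fun x => if Nat.eqb x lo then G x - G (x + 2)%nat else 0))
      by (intros; now rewrite window_0).
    rewrite Rsum_eqb by lia. do 3 f_equal. lia.
  - rewrite (Rsum_ext _ (fun x => (if window lo p x then G x - G (x + 2)%nat else 0) +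
        (if Nat.eqb x (lo + 2 * p + 2) then G x - G (x + 2)%nat else 0)))
      by (intros; apply (window_S (fun x => G x - G (x + 2)%nat))).
    rewrite Rsum_plus, IH, Rsum_eqb by lia.
    replace (lo + 2 * p + 2 + 2)%nat with (lo + 2 * S p + 2)%nat by lia. ring.
Qed.

Lemma fusionN_window k a c x : (a <= k)%nat -> (c <= k)%nat ->
  fusionN k x a c =
  window (Nat.max a c - Nat.min a c) (Nat.min (Nat.min a c) (k - Nat.max a c)) x.
Proof.
  intros Ha Hc. unfold fusionN, window.
  destruct (Nat.leb_spec (Nat.max x a - Nat.min x a) c),
    (Nat.leb_spec c (Nat.min (x + a) (2 * k - (x + a)))),
    (Nat.leb_spec x k), (Nat.leb_spec a k), (Nat.leb_spec c k),
    (Nat.leb_spec (Nat.max a c - Nat.min a c) x),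
    (Nat.leb_spec x (Nat.max a c - Nat.min a c + 2 * Nat.min (Nat.min a c) (k - Nat.max a c)));
  case_parity (x + a + c)%nat; case_parity (x + (Nat.max a c - Nat.min a c))%nat;
  simpl; auto; lia.
Qed.

Lemma fusionN_comm k a b c : fusionN k a b c = fusionN k b a c.
Proof.
  unfold fusionN. rewrite (Nat.max_comm a b), (Nat.min_comm a b), (Nat.add_comm a b).
  destruct (Nat.leb a k), (Nat.leb b k); simpl; rewrite ?Bool.andb_true_r, ?Bool.andb_false_r; auto.
Qed.

Lemma sin_S_theta_pos k b : (b <= k)%nat -> 0 < sin (INR (S b) * theta k).
Proof.
  intros Hb. pose proof (theta_pos k). apply sin_gt_0.
  - apply Rmult_lt_0_compat; [apply lt_0_INR; lia | lra].
  - rewrite <- (INR_mult_theta k). apply Rmult_lt_compat_r; [lra | apply lt_INR; lia].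
Qed.

Lemma smat_0_l k b : smat k 0 b = sin (INR (S b) * theta k).
Proof. unfold smat. f_equal. simpl (INR 1). ring. Qed.

Lemma smat_0_r k a : smat k a 0 = sin (INR (S a) * theta k).
Proof. rewrite smat_sym. apply smat_0_l. Qed.

Lemma smat_0_l_pos k b : (b <= k)%nat -> 0 < smat k 0 b.
Proof. intros. rewrite smat_0_l. now apply sin_S_theta_pos. Qed.

(* The window ends at a + c, or at its reflection 2k - (a + c) when the level-k
   truncation is active. *)
Lemma cos_window_end k a c b phi : (a <= k)%nat -> (c <= k)%nat ->
  phi = INR (S b) * theta k ->
  cos (INR (Nat.max a c - Nat.min a c + 2 * Nat.min (Nat.min a c) (k - Nat.max a c) + 2) * phi)
  = cos ((INR (S a) + INR (S c)) * phi).
Proof.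
  intros Ha Hc Hphi.
  destruct (le_lt_dec (a + c) (2 * k - (a + c))).
  - f_equal. f_equal. replace (_ + _ + 2)%nat with (a + c + 2)%nat by lia. push_INR. ring.
  - replace (_ + _ + 2)%nat with (2 * (k + 2) - (a + c + 2))%nat by lia.
    rewrite minus_INR, mult_INR by lia.
    replace ((INR 2 * INR (k + 2) - INR (a + c + 2)) * phi) with
      (INR (2 * S b) * PI - INR (a + c + 2) * phi)
      by (rewrite Hphi, <- (INR_mult_theta k), mult_INR; ring).
    rewrite cos_nPI_minus, pow_m1_double, Rmult_1_l. f_equal. push_INR. ring.
Qed.

(* With phi = (b+1) theta, 2 sin phi sin((x+1) phi) = cos(x phi) - cos((x+2) phi)
   telescopes over the window of x allowed by the fusion rules. *)
Lemma fusion_smat_eigen k a c b : (a <= k)%nat -> (c <= k)%nat -> (b <= k)%nat ->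
  Rsum (fun x => if fusionN k x a c then smat k x b else 0) (S k) =
  smat k a b * smat k c b / smat k 0 b.
Proof.
  intros Ha Hc Hb.
  set (phi := INR (S b) * theta k).
  assert (Hs : 0 < sin phi) by now apply sin_S_theta_pos.
  assert (Hsm : forall x, smat k x b = sin (INR (S x) * phi))
    by (intros; unfold smat, phi; f_equal; ring).
  set (lo := (Nat.max a c - Nat.min a c)%nat).
  set (p := Nat.min (Nat.min a c) (k - Nat.max a c)).
  set (G := fun x : nat => cos (INR x * phi) / (2 * sin phi)).
  rewrite (Rsum_ext _ (fun x => if window lo p x then G x - G (x + 2)%nat else 0)).
  2:{ intros x _. rewrite fusionN_window by auto. fold lo p.
      destruct (window lo p x); [|reflexivity].
      unfold G. rewrite Hsm. apply (Rmult_eq_reg_l (2 * sin phi)); [|lra].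
      field_simplify; [|lra].
      rewrite Rmult_assoc, (Rmult_comm (sin phi)), sin_mult_sin, plus_INR, S_INR. simpl (INR 2).
      replace ((INR x + 1) * phi - phi) with (INR x * phi) by ring.
      replace ((INR x + 1) * phi + phi) with ((INR x + (1 + 1)) * phi) by ring. field. }
  rewrite Rsum_window_telescope by (unfold lo, p; lia).
  unfold G, lo, p. rewrite (cos_window_end k a c b phi) by auto.
  replace (cos (INR (Nat.max a c - Nat.min a c) * phi)) with (cos ((INR (S a) - INR (S c)) * phi)).
  2:{ destruct (le_lt_dec c a).
      - rewrite Nat.max_l, Nat.min_r, minus_INR by lia. push_INR. f_equal. ring.
      - rewrite Nat.max_r, Nat.min_l, minus_INR, <- cos_neg by lia. push_INR. f_equal. ring. }
  rewrite smat_0_l, !Hsm. fold phi.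
  rewrite sin_mult_sin, <- Rmult_minus_distr_r, <- Rmult_plus_distr_r. field. lra.
Qed.

Lemma Rsum_fusion_verlinde k jj a c n : (jj <= k)%nat -> (a <= k)%nat -> (c <= k)%nat ->
  Rsum (fun x => if fusionN k x a c then verlinde k jj 0 x n else 0) (S k) =
  (2 / INR (k + 2)) * Rsum (fun b => smat k a b * smat k c b * eig k jj b ^ n) (S k).
Proof.
  intros Hjj Ha Hc.
  rewrite (Rsum_ext _ (fun x => (2 / INR (k + 2)) * Rsum (fun b =>
     smat k 0 b * eig k jj b ^ n * (if fusionN k x a c then smat k x b else 0)) (S k))).
  2:{ intros x Hx. unfold verlinde. destruct (fusionN k x a c).
      - f_equal. apply Rsum_ext. intros. ring.
      - rewrite (Rsum_ext _ (fun _ => 0)), Rsum_zero by (intros; ring). ring. }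
  rewrite Rsum_scal_l, Rsum_exchange. f_equal. apply Rsum_ext. intros b Hb.
  rewrite Rsum_scal_l, fusion_smat_eigen by lia.
  assert (0 < smat k 0 b) by (apply smat_0_l_pos; lia).
  field. lra.
Qed.

Lemma Dpaths_verlinde k jj n c : (jj <= k)%nat -> (c <= k)%nat ->
  INR (Dpaths k jj n c) = verlinde k jj 0 c n.
Proof.
  intros Hjj. revert c. induction n as [|n IH]; intros c Hc.
  - unfold verlinde. simpl Dpaths.
    rewrite (Rsum_ext _ (fun b => smat k 0 b * smat k c b)) by (intros; simpl; ring).
    rewrite smat_orthogonal by lia. pose proof (INR_k2_pos k).
    destruct c; simpl; field; lra.
  - simpl Dpaths. rewrite INR_natsum.
    rewrite (Rsum_ext _ (fun x => if fusionN k x jj c then verlinde k jj 0 x n else 0)).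
    2:{ intros x Hx. destruct (fusionN k x jj c); [apply IH; lia | reflexivity]. }
    rewrite Rsum_fusion_verlinde by lia. unfold verlinde. f_equal. apply Rsum_ext. intros b Hb.
    unfold eig. simpl. assert (0 < smat k 0 b) by (apply smat_0_l_pos; lia). field. lra.
Qed.

Lemma n_alpha_verlinde k jj JJ LB al : (jj <= k)%nat -> (JJ <= k)%nat -> (al <= k)%nat ->
  INR (n_alpha k jj JJ LB al) = verlinde k jj al JJ LB.
Proof.
  intros Hjj HJ Hal. unfold n_alpha. rewrite INR_natsum.
  rewrite (Rsum_ext _ (fun x => if fusionN k x al JJ then verlinde k jj 0 x LB else 0)).
  2:{ intros x Hx. rewrite fusionN_comm.
      destruct (fusionN k x al JJ); [apply Dpaths_verlinde; lia | reflexivity]. }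
  now rewrite Rsum_fusion_verlinde by lia.
Qed.

(* Orthogonality of the S-matrix collapses the double sum over b, b'. *)
Lemma verlinde_split k jj JJ LA LB : (JJ <= k)%nat ->
  Rsum (fun al => verlinde k jj 0 al LA * verlinde k jj al JJ LB) (S k) =
  verlinde k jj 0 JJ (LA + LB).
Proof.
  intros HJ. unfold verlinde.
  set (c := 2 / INR (k + 2)).
  set (F := fun b b' => smat k 0 b * eig k jj b ^ LA * (smat k JJ b' * eig k jj b' ^ LB)).
  rewrite (Rsum_ext _ (fun al => c * c * Rsum (fun b => Rsum (fun b' =>
      F b b' * (smat k b al * smat k b' al)) (S k)) (S k))).
  2:{ intros al Hal.
      transitivity (c * c * (Rsum (fun b => smat k 0 b * smat k al b * eig k jj b ^ LA) (S k) *
        Rsum (fun b => smat k al b * smat k JJ b * eig k jj b ^ LB) (S k))); [ring|].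
      f_equal. rewrite Rsum_mult_Rsum. apply Rsum_ext. intros b _. apply Rsum_ext. intros b' _.
      unfold F. rewrite (smat_sym k al b), (smat_sym k al b'). ring. }
  rewrite Rsum_scal_l, Rsum_exchange.
  rewrite (Rsum_ext _ (fun b => F b b * (INR (k + 2) / 2))).
  2:{ intros b Hb. rewrite Rsum_exchange.
      rewrite (Rsum_ext _ (fun b' => if Nat.eqb b' b then F b b' * (INR (k + 2) / 2) else 0)).
      - now rewrite Rsum_eqb by lia.
      - intros b' Hb'. rewrite Rsum_scal_l, smat_orthogonal by lia.
        destruct (Nat.eqb_spec b b'), (Nat.eqb_spec b' b); subst; try lia; ring. }
  unfold c. rewrite <- !Rsum_scal_l. apply Rsum_ext. intros b _.
  unfold F. rewrite pow_add. pose proof (INR_k2_pos k). field. lra.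
Qed.

Lemma Rsum_m_alpha_n_alpha k jj JJ LA LB : (jj <= k)%nat -> (JJ <= k)%nat ->
  Rsum (fun a => INR (m_alpha k jj LA a) * INR (n_alpha k jj JJ LB a)) (S k) =
  INR (Dpaths k jj (LA + LB) JJ).
Proof.
  intros Hjj HJ.
  rewrite (Rsum_ext _ (fun a => verlinde k jj 0 a LA * verlinde k jj a JJ LB)).
  - rewrite verlinde_split by lia. symmetry. apply Dpaths_verlinde; lia.
  - intros a Ha. unfold m_alpha. rewrite Dpaths_verlinde, n_alpha_verlinde by lia. reflexivity.
Qed.

Lemma Dpaths_parity k jj n c : Dpaths k jj n c <> 0%nat -> Nat.even (c + jj * n) = true.
Proof.
  revert c. induction n as [|n IH]; intros c H.
  - simpl in H. destruct (Nat.eqb_spec c 0); [subst; now rewrite Nat.mul_0_r | lia].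
  - simpl in H. apply natsum_neq0 in H. destruct H as [x [Hx Hf]].
    destruct (fusionN k x jj c) eqn:F; [|lia].
    specialize (IH x Hf). unfold fusionN in F.
    repeat (apply andb_prop in F; destruct F as [F ?]).
    apply Nat.even_spec in IH. destruct IH as [q Hq].
    match goal with H : Nat.even (x + jj + c) = true |- _ =>
      apply Nat.even_spec in H; destruct H as [r Hr] end.
    apply Nat.even_spec. exists (r + q - x)%nat. rewrite Nat.mul_succ_r. lia.
Qed.

(** * The spectral gap *)

Lemma PI_le_7_2 : PI <= 7 / 2.
Proof. destruct (PI_ineq 1) as [_ H]. unfold tg_alt, PI_tg in H. simpl in H. lra. Qed.

(* The Chebyshev polynomial U_{n-1}(cos psi) as a sum of cosines. *)
Definition cheb_sum (n : nat) (psi : R) : R :=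
  Rsum (fun i => cos ((INR n - 1 - 2 * INR i) * psi)) n.

Lemma sin_mult_cheb_sum n psi : sin psi * cheb_sum n psi = sin (INR n * psi).
Proof.
  assert (T : forall c m, Rsum (fun i => 2 * sin psi * cos ((c - 2 * INR i) * psi)) m =
                          sin ((c + 1) * psi) - sin ((c + 1 - 2 * INR m) * psi)).
  { intros c m. induction m as [|m IH].
    - unfold Rsum; simpl. replace (c + 1 - 2 * 0) with (c + 1) by ring. ring.
    - rewrite Rsum_S, IH, two_sin_mult_cos, S_INR.
      replace ((c - 2 * INR m) * psi + psi) with ((c + 1 - 2 * INR m) * psi) by ring.
      replace ((c - 2 * INR m) * psi - psi) with ((c + 1 - 2 * (INR m + 1)) * psi) by ring.
      ring. }
  specialize (T (INR n - 1) n). rewrite Rsum_scal_l in T. unfold cheb_sum.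
  replace ((INR n - 1 + 1 - 2 * INR n) * psi) with (- (INR n * psi)) in T by ring.
  replace ((INR n - 1 + 1) * psi) with (INR n * psi) in T by ring.
  rewrite sin_neg in T. lra.
Qed.

Lemma cos_Rabs x : cos (Rabs x) = cos x.
Proof. unfold Rabs. destruct (Rcase_abs x); [apply cos_neg | reflexivity]. Qed.

(* Termwise comparison: every angle (n-1-2i) m t stays in [-PI, PI]. *)
Lemma cheb_sum_lt t n m : 0 < t -> (2 <= n)%nat -> (2 <= m)%nat ->
  INR n * INR m * t <= PI -> cheb_sum n (INR m * t) < cheb_sum n t.
Proof.
  intros Ht Hn Hm Hnm.
  assert (Hn' : 2 <= INR n) by (apply (le_INR 2); lia).
  assert (Hm' : 2 <= INR m) by (apply (le_INR 2); lia).
  unfold cheb_sum. apply (Rsum_lt _ _ _ 0%nat); [lia| |].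
  - intros i Hi.
    assert (INR (S i) <= INR n) by (apply le_INR; lia). rewrite S_INR in *.
    assert (0 <= INR i) by apply pos_INR.
    set (s := INR n - 1 - 2 * INR i).
    assert (Hs : Rabs s <= INR n - 1) by (unfold s; apply Rabs_le; lra).
    pose proof (Rabs_pos s).
    rewrite <- (cos_Rabs (s * t)), <- (cos_Rabs (s * (INR m * t))),
      (Rabs_mult s t), (Rabs_mult s (INR m * t)).
    rewrite (Rabs_right t), (Rabs_right (INR m * t)) by nra.
    assert (0 <= Rabs s * t) by (apply Rmult_le_pos; lra).
    assert (Rabs s * t <= Rabs s * (INR m * t)) by (apply Rmult_le_compat_l; nra).
    assert (Rabs s * (INR m * t) <= INR n * INR m * t).
    { rewrite <- Rmult_assoc. apply Rmult_le_compat_r; [lra|]. apply Rmult_le_compat_r; lra. }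
    apply cos_decr_1; lra.
  - simpl INR. replace (INR n - 1 - 2 * 0) with (INR n - 1) by ring.
    assert (0 < (INR n - 1) * t) by (apply Rmult_lt_0_compat; lra).
    assert ((INR n - 1) * t < (INR n - 1) * (INR m * t)) by nra.
    assert ((INR n - 1) * (INR m * t) <= INR n * INR m * t) by nra.
    apply cos_decreasing_1; lra.
Qed.

Lemma sin_product_gap_small t n m : 0 < t -> (2 <= n)%nat -> (2 <= m)%nat ->
  INR (n * m) * t <= PI ->
  Rabs (sin (INR (n * m) * t)) * sin t < sin (INR n * t) * sin (INR m * t).
Proof.
  intros Ht Hn Hm Hnm. rewrite mult_INR in *.
  assert (Hn' : 2 <= INR n) by (apply (le_INR 2); lia).
  assert (Hm' : 2 <= INR m) by (apply (le_INR 2); lia).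
  assert (0 < INR m * t) by (apply Rmult_lt_0_compat; lra).
  assert (0 <= (INR n - 2) * (INR m * t)) by (apply Rmult_le_pos; lra).
  assert (Hmt : 2 * (INR m * t) <= PI) by nra.
  rewrite Rabs_right by (apply Rle_ge, sin_ge_0; nra).
  assert (0 < sin t) by (apply sin_gt_0; nra).
  assert (0 < sin (INR m * t)) by (apply sin_gt_0; nra).
  rewrite <- (sin_mult_cheb_sum n t).
  replace (INR n * INR m * t) with (INR n * (INR m * t)) by ring.
  rewrite <- (sin_mult_cheb_sum n (INR m * t)).
  pose proof (cheb_sum_lt t n m Ht Hn Hm Hnm).
  assert (0 < sin t * sin (INR m * t)) by (apply Rmult_lt_0_compat; lra).
  nra.
Qed.

Lemma sin_second_difference t i : 0 < t -> INR (S i) * t <= PI ->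
  sin (INR (S (S i)) * t) + sin (INR i * t) <= 2 * sin (INR (S i) * t).
Proof.
  intros Ht H.
  replace (INR (S (S i)) * t) with (INR (S i) * t + t) by (push_INR; ring).
  replace (INR i * t) with (INR (S i) * t - t) by (push_INR; ring).
  rewrite sin_plus, sin_minus.
  assert (0 <= sin (INR (S i) * t))
    by (apply sin_ge_0; [apply Rmult_le_pos, Rlt_le|]; auto using pos_INR).
  pose proof (COS_bound t). nra.
Qed.

Lemma sin_increment_le t i : 0 < t -> INR i * t <= PI ->
  INR i * (sin (INR (S i) * t) - sin (INR i * t)) <= sin (INR i * t).
Proof.
  intros Ht. induction i as [|i IH]; intros H.
  - simpl INR. rewrite !Rmult_0_l, sin_0. lra.
  - assert (Hi : INR i * t <= PI) by (rewrite S_INR in H; lra).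
    specialize (IH Hi). pose proof (sin_second_difference t i Ht H).
    assert (0 <= INR i) by apply pos_INR.
    assert (sin (INR (S (S i)) * t) - sin (INR (S i) * t) <=
            sin (INR (S i) * t) - sin (INR i * t)) by lra.
    rewrite S_INR at 1. nra.
Qed.

Lemma sin_nat_ratio_antitone t i d : 0 < t -> INR (i + d) * t <= PI ->
  INR i * sin (INR (i + d) * t) <= INR (i + d) * sin (INR i * t).
Proof.
  intros Ht. induction d as [|d IH]; intros H.
  - rewrite Nat.add_0_r. lra.
  - rewrite Nat.add_succ_r in *.
    assert (H' : INR (i + d) * t <= PI) by (rewrite S_INR in H; nra).
    specialize (IH H').
    pose proof (sin_increment_le t (i + d) Ht H') as Inc.
    assert (INR i <= INR (i + d)) by (apply le_INR; lia).
    assert (0 <= sin (INR i * t))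
      by (apply sin_ge_0; [apply Rmult_le_pos, Rlt_le|]; auto using pos_INR; nra).
    assert (0 <= INR i) by apply pos_INR.
    pose proof (pos_INR (i + d)).
    set (M := INR (i + d)) in *.
    set (c := sin (INR (S (i + d)) * t)) in *.
    rewrite S_INR. fold M.
    destruct (Req_dec M 0) as [E|E].
    + assert (INR i = 0) by lra. rewrite E in *. nra.
    + assert (0 < M) by lra.
      apply (Rmult_le_reg_l M); [lra|].
      assert (INR i * (M * (c - sin (M * t))) <= INR i * sin (M * t))
        by (apply Rmult_le_compat_l; lra).
      assert ((M + 1) * (INR i * sin (M * t)) <= (M + 1) * (M * sin (INR i * t)))
        by (apply Rmult_le_compat_l; lra).
      nra.
Qed.

(* Jordan-type lower bound on [0, PI/2], from the midpoint M = floor(N/2). *)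
Lemma sin_nat_lb N i t : 0 < t -> INR N * t = PI -> (2 * i <= N)%nat ->
  2 * INR i * cos (t / 2) <= INR N * sin (INR i * t).
Proof.
  intros Ht HNt Hi.
  set (M := Nat.div2 N).
  assert (HM : (N = 2 * M \/ N = 2 * M + 1)%nat).
  { unfold M. destruct (Nat.Even_or_Odd N) as [He|Ho].
    - left. rewrite (Nat.Even_double N) at 1 by auto. unfold Nat.double. lia.
    - right. rewrite (Nat.Odd_double N) at 1 by auto. unfold Nat.double. lia. }
  assert (HMN : 2 * INR M <= INR N) by (destruct HM as [E|E]; rewrite E; push_INR; simpl; lra).
  assert (HMt : INR M * t <= PI / 2 /\ PI / 2 - t / 2 <= INR M * t).
  { destruct HM as [E|E]; rewrite E, ?plus_INR, mult_INR in HNt; simpl (INR 2) in HNt;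
      simpl (INR 1) in HNt; split; lra. }
  assert (Htpi : t <= PI).
  { destruct N as [|N]; [simpl in HNt; pose proof PI_RGT_0; lra|].
    assert (1 <= INR (S N)) by (apply (le_INR 1); lia). nra. }
  assert (0 <= INR M * t) by (apply Rmult_le_pos; [apply pos_INR | lra]).
  assert (Hcos : cos (t / 2) <= sin (INR M * t)).
  { rewrite <- sin_shift. apply sin_incr_1; lra. }
  assert (HiM : (i <= M)%nat) by lia.
  pose proof (sin_nat_ratio_antitone t i (M - i) Ht) as A.
  replace (i + (M - i))%nat with M in A by lia.
  assert (0 <= INR i) by apply pos_INR.
  assert (0 <= cos (t / 2)) by (apply cos_ge_0; lra).
  assert (0 <= sin (INR i * t)).
  { apply sin_ge_0; [apply Rmult_le_pos, Rlt_le; auto using pos_INR|].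
    assert (INR i <= INR M) by (apply le_INR; auto). nra. }
  specialize (A ltac:(lra)). nra.
Qed.

(* N^2 sin(nt) sin(mt) >= 4 n m cos^2(t/2) > 2 N (1 + cos t) >= N PI > N^2 sin t, where the
   last-but-one step uses t <= PI/6 and PI <= 7/2. *)
Lemma sin_product_gap_large N n m : (2 * n <= N)%nat -> (2 * m <= N)%nat -> (N < n * m)%nat ->
  sin (PI / INR N) < sin (INR n * (PI / INR N)) * sin (INR m * (PI / INR N)).
Proof.
  intros Hn Hm Hnm.
  assert (H6 : (6 <= N)%nat).
  { destruct (le_lt_dec 6 N); [auto | exfalso].
    assert (n <= 2)%nat by lia. assert (m <= 2)%nat by lia. nia. }
  set (t := PI / INR N).
  assert (HN : 6 <= INR N) by (replace 6 with (INR 6) by (simpl; lra); apply le_INR; lia).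
  assert (HNt : INR N * t = PI) by (unfold t; field; lra).
  pose proof PI_RGT_0. pose proof PI_le_7_2.
  assert (Ht : 0 < t) by (unfold t; apply Rdiv_lt_0_compat; lra).
  assert (Ht6 : t <= PI / 6)
    by (unfold t; apply Rmult_le_compat_l; [lra|]; apply Rinv_le_contravar; lra).
  assert (Hcos : sqrt 3 / 2 <= cos t) by (rewrite <- cos_PI6; apply cos_decr_1; lra).
  assert (Hs3 : 17 / 10 <= sqrt 3) by (pose proof (sqrt_pos 3); pose proof (sqrt_sqrt 3); nra).
  assert (Hc2 : cos (t / 2) * cos (t / 2) = (1 + cos t) / 2).
  { replace t with (2 * (t / 2)) at 3 by field. rewrite cos_2a_cos. field. }
  assert (0 <= cos (t / 2)) by (apply cos_ge_0; lra).
  pose proof (sin_nat_lb N n t Ht HNt Hn) as Ln.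
  pose proof (sin_nat_lb N m t Ht HNt Hm) as Lm.
  assert (Hnm' : INR N + 1 <= INR n * INR m)
    by (rewrite <- mult_INR, <- S_INR; apply le_INR; lia).
  assert (0 <= INR n) by apply pos_INR. assert (0 <= INR m) by apply pos_INR.
  assert (P : 4 * (INR n * INR m) * (cos (t / 2) * cos (t / 2)) <=
              INR N * INR N * (sin (INR n * t) * sin (INR m * t))).
  { replace (4 * (INR n * INR m) * (cos (t / 2) * cos (t / 2))) with
      ((2 * INR n * cos (t / 2)) * (2 * INR m * cos (t / 2))) by ring.
    replace (INR N * INR N * (sin (INR n * t) * sin (INR m * t))) with
      ((INR N * sin (INR n * t)) * (INR N * sin (INR m * t))) by ring.
    apply Rmult_le_compat; nra. }
  assert (sin t < t) by (apply sin_lt_x; lra).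
  assert (INR N * INR N * (sin (INR n * t) * sin (INR m * t)) > INR N * INR N * t) by nra.
  nra.
Qed.

Lemma sin_reflect N n t : INR N * t = PI -> (n <= N)%nat ->
  sin (INR (N - n) * t) = sin (INR n * t).
Proof.
  intros HN Hn. rewrite minus_INR by auto.
  replace ((INR N - INR n) * t) with (PI - INR n * t) by lra. apply sin_PI_x.
Qed.

Lemma Rabs_sin_reflect_mult N n m t : INR N * t = PI -> (n <= N)%nat ->
  Rabs (sin (INR (N - n) * INR m * t)) = Rabs (sin (INR n * INR m * t)).
Proof.
  intros HN Hn. rewrite minus_INR by auto.
  replace ((INR N - INR n) * INR m * t) with (INR m * PI - INR n * INR m * t)
    by (rewrite <- HN; ring).
  rewrite sin_nPI_minus, Rabs_mult, Rabs_Ropp, pow_1_abs. ring.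
Qed.

Lemma reflect_to_first_half N t n : INR N * t = PI -> (2 <= n)%nat -> (n + 2 <= N)%nat ->
  exists n', (2 <= n')%nat /\ (2 * n' <= N)%nat /\ sin (INR n' * t) = sin (INR n * t) /\
    forall m, Rabs (sin (INR n' * INR m * t)) = Rabs (sin (INR n * INR m * t)).
Proof.
  intros HN Hn1 Hn2. destruct (le_lt_dec (2 * n) N).
  - exists n. auto.
  - exists (N - n)%nat. repeat split; try lia.
    + apply sin_reflect; auto; lia.
    + intros m. apply Rabs_sin_reflect_mult; auto; lia.
Qed.

(* With N = k + 2, n = jj + 1 and m = b + 1 this is |eig b| < eig 0.  After reflecting n, m
   into [2, N/2], products n m <= N are handled by the Chebyshev sums, larger ones by
   the Jordan-type bound. *)
Lemma sin_product_gap N n m :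
  (2 <= n)%nat -> (n + 2 <= N)%nat -> (2 <= m)%nat -> (m + 2 <= N)%nat ->
  Rabs (sin (INR n * INR m * (PI / INR N))) * sin (PI / INR N) <
  sin (INR n * (PI / INR N)) * sin (INR m * (PI / INR N)).
Proof.
  intros Hn1 Hn2 Hm1 Hm2.
  set (t := PI / INR N).
  assert (HN : 0 < INR N) by (apply lt_0_INR; lia).
  assert (HNt : INR N * t = PI) by (unfold t; field; lra).
  pose proof PI_RGT_0.
  assert (Ht : 0 < t) by (unfold t; apply Rdiv_lt_0_compat; lra).
  destruct (reflect_to_first_half N t n HNt Hn1 Hn2) as [n' [Hn'1 [Hn'2 [Sn Rn]]]].
  destruct (reflect_to_first_half N t m HNt Hm1 Hm2) as [m' [Hm'1 [Hm'2 [Sm Rm]]]].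
  rewrite <- Sn, <- Sm, <- Rn, (Rmult_comm (INR n') (INR m)), <- Rm,
    (Rmult_comm (INR m') (INR n')), <- mult_INR.
  destruct (le_lt_dec (n' * m') N) as [Hs|Hl].
  - apply sin_product_gap_small; auto.
    rewrite <- HNt. apply Rmult_le_compat_r; [lra | apply le_INR; auto].
  - pose proof (sin_product_gap_large N n' m' Hn'2 Hm'2 Hl) as L. fold t in L.
    assert (Rabs (sin (INR (n' * m') * t)) <= 1) by (apply Rabs_le, SIN_bound).
    assert (2 <= INR N) by (apply (le_INR 2); lia).
    assert (0 < sin t) by (apply sin_gt_0; [lra | unfold t; apply Rlt_div_l; nra]).
    nra.
Qed.

Lemma sin_pi_div_min_half N i : (1 <= i)%nat -> (2 * i <= N)%nat ->
  sin (PI / INR N) <= sin (INR i * (PI / INR N)) /\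
  ((2 <= i)%nat -> sin (PI / INR N) < sin (INR i * (PI / INR N))).
Proof.
  intros H1 H2.
  assert (HN : 0 < INR N) by (apply lt_0_INR; lia).
  pose proof PI_RGT_0.
  set (t := PI / INR N).
  assert (Ht : 0 < t) by (unfold t; apply Rdiv_lt_0_compat; lra).
  assert (Hi : 2 * INR i <= INR N) by (rewrite <- (mult_INR 2); apply le_INR; auto).
  assert (Hit : INR i * t <= PI / 2).
  { unfold t. apply (Rmult_le_reg_r (2 * INR N)); [lra|].
    replace (INR i * (PI / INR N) * (2 * INR N)) with (2 * INR i * PI) by (field; lra). nra. }
  assert (Hi1 : 1 <= INR i) by (apply (le_INR 1); auto).
  split.
  - apply sin_incr_1; nra.
  - intros H3. assert (2 <= INR i) by (apply (le_INR 2); auto). apply sin_increasing_1; nra.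
Qed.

Lemma sin_pi_div_min N i : (1 <= i)%nat -> (i + 1 <= N)%nat ->
  sin (PI / INR N) <= sin (INR i * (PI / INR N)) /\
  ((2 <= i)%nat -> (i + 2 <= N)%nat -> sin (PI / INR N) < sin (INR i * (PI / INR N))).
Proof.
  intros H1 H2.
  assert (HN : 0 < INR N) by (apply lt_0_INR; lia).
  destruct (le_lt_dec (2 * i) N) as [Hh|Hh].
  - destruct (sin_pi_div_min_half N i H1 Hh) as [A B]. split; auto.
  - assert (HNt : INR N * (PI / INR N) = PI) by (field; lra).
    rewrite <- (sin_reflect N i (PI / INR N) HNt) by lia.
    destruct (sin_pi_div_min_half N (N - i)) as [A B]; try lia. split; auto.
    intros. apply B. lia.
Qed.

Lemma smat_0_0 k : smat k 0 0 = sin (theta k).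
Proof. rewrite smat_0_l. f_equal. simpl. ring. Qed.

Lemma smat_0_0_pos k : 0 < smat k 0 0.
Proof. apply smat_0_l_pos. lia. Qed.

Lemma smat_0_0_le k a : (a <= k)%nat -> smat k 0 0 <= smat k a 0.
Proof. intros Ha. rewrite smat_0_0, smat_0_r. apply sin_pi_div_min; lia. Qed.

Lemma smat_0_0_lt k a : (1 <= a)%nat -> (a + 1 <= k)%nat -> smat k 0 0 < smat k a 0.
Proof. intros Ha1 Ha2. rewrite smat_0_0, smat_0_r. apply sin_pi_div_min; lia. Qed.

Lemma Rabs_smat_le_1 k a b : Rabs (smat k a b) <= 1.
Proof. apply Rabs_le, SIN_bound. Qed.

Lemma qdim_smat k a : qdim k a = smat k a 0 / smat k 0 0.
Proof.
  unfold qdim. rewrite smat_0_0, smat_0_r, Nat.add_1_r. unfold theta. f_equal. f_equal. lra.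
Qed.

Lemma eig_0 k jj : eig k jj 0 = qdim k jj.
Proof. unfold eig. now rewrite qdim_smat. Qed.

Lemma qdim_ge_1 k a : (a <= k)%nat -> 1 <= qdim k a.
Proof.
  intros Ha. rewrite qdim_smat. pose proof (smat_0_0_pos k). pose proof (smat_0_0_le k a Ha).
  apply Rle_div_r; lra.
Qed.

Lemma qdim_gt_1 k a : (1 <= a)%nat -> (a + 1 <= k)%nat -> 1 < qdim k a.
Proof.
  intros Ha1 Ha2. rewrite qdim_smat.
  pose proof (smat_0_0_pos k). pose proof (smat_0_0_lt k a Ha1 Ha2).
  apply Rlt_div_r; lra.
Qed.

Lemma smat_k k c : smat k c k = (-1) ^ c * smat k c 0.
Proof.
  rewrite smat_0_r. unfold smat.
  replace (INR (S c) * INR (S k) * theta k) with (INR (S c) * PI - INR (S c) * theta k).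
  - rewrite sin_nPI_minus. simpl. ring.
  - rewrite <- (INR_mult_theta k). push_INR. simpl (INR 2). ring.
Qed.

Lemma eig_k k jj : eig k jj k = (-1) ^ jj * qdim k jj.
Proof.
  unfold eig. rewrite !smat_k, qdim_smat. simpl (_ ^ 0). pose proof (smat_0_0_pos k). field. lra.
Qed.

Lemma eig_gap k jj b : (1 <= jj)%nat -> (jj + 1 <= k)%nat -> (1 <= b)%nat -> (b + 1 <= k)%nat ->
  Rabs (eig k jj b) < qdim k jj.
Proof.
  intros H1 H2 H3 H4.
  pose proof (sin_product_gap (k + 2) (S jj) (S b)) as K.
  specialize (K ltac:(lia) ltac:(lia) ltac:(lia) ltac:(lia)).
  fold (theta k) in K.
  assert (P0 : 0 < smat k 0 b) by (apply smat_0_l_pos; lia).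
  pose proof (smat_0_0_pos k) as P00.
  rewrite qdim_smat. unfold eig. rewrite smat_0_0, smat_0_r, smat_0_l in *.
  unfold Rdiv at 1. rewrite Rabs_mult, Rabs_inv, (Rabs_right (sin (INR (S b) * theta k))) by lra.
  apply (Rmult_lt_reg_r (sin (INR (S b) * theta k) * sin (theta k))); [nra|].
  unfold smat. field_simplify; lra.
Qed.

(** * Dominant asymptotics of the fusion path counts *)

Definition interior (k b : nat) : bool := negb (Nat.eqb b 0) && negb (Nat.eqb b k).

(* Leading coefficient of verlinde k jj a c n / d_j^n: the columns b = 0 and
   b = k contribute equally when a + c + jj n is even. *)
Definition lead (k a c : nat) : R := 4 / INR (k + 2) * smat k a 0 * smat k c 0.

Definition interior_remainder (k jj a c n : nat) : R :=
  2 / INR (k + 2) *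
  Rsum (fun b => if interior k b then smat k a b * smat k c b * (eig k jj b / qdim k jj) ^ n else 0)
    (S k).

Lemma lead_ge k a c : (a <= k)%nat -> (c <= k)%nat -> lead k 0 0 <= lead k a c.
Proof.
  intros Ha Hc. unfold lead.
  assert (0 < 4 / INR (k + 2)) by (apply Rdiv_lt_0_compat; [lra | apply INR_k2_pos]).
  pose proof (smat_0_0_pos k). pose proof (smat_0_0_le k a Ha). pose proof (smat_0_0_le k c Hc).
  rewrite !Rmult_assoc. apply Rmult_le_compat_l; [lra|]. apply Rmult_le_compat; lra.
Qed.

Lemma lead_pos k a c : (a <= k)%nat -> (c <= k)%nat -> 0 < lead k a c.
Proof.
  intros Ha Hc. eapply Rlt_le_trans; [|apply lead_ge; eauto].
  unfold lead. pose proof (smat_0_0_pos k).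
  apply Rmult_lt_0_compat; [apply Rmult_lt_0_compat|]; auto.
  apply Rdiv_lt_0_compat; [lra | apply INR_k2_pos].
Qed.

Lemma lead_qdim_r k a c : lead k a c = lead k 0 a * qdim k c.
Proof.
  unfold lead. rewrite qdim_smat. pose proof (smat_0_0_pos k). pose proof (INR_k2_pos k).
  field. split; lra.
Qed.

Lemma verlinde_decomp k jj a c n : (1 <= k)%nat -> 0 < qdim k jj ->
  Nat.even (a + c + jj * n) = true ->
  verlinde k jj a c n = qdim k jj ^ n * (lead k a c + interior_remainder k jj a c n).
Proof.
  intros Hk Hd Hpar. set (d := qdim k jj).
  set (F := fun b => smat k a b * smat k c b * eig k jj b ^ n).
  unfold verlinde. fold F.
  rewrite (Rsum_ext F (fun b => (if Nat.eqb b 0 then F b else 0) +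
      (if Nat.eqb b k then F b else 0) + (if interior k b then F b else 0))).
  2:{ intros b Hb. unfold interior.
      destruct (Nat.eqb_spec b 0), (Nat.eqb_spec b k); simpl; try lia; ring. }
  rewrite !Rsum_plus, !Rsum_eqb by lia.
  unfold F. rewrite eig_k, eig_0, !smat_k. fold d.
  rewrite (Rsum_ext (fun b => if interior k b then smat k a b * smat k c b * eig k jj b ^ n else 0)
     (fun b => d ^ n *
        (if interior k b then smat k a b * smat k c b * (eig k jj b / d) ^ n else 0))).
  2:{ intros b _. destruct (interior k b); [|ring].
      unfold Rdiv. rewrite Rpow_mult_distr, pow_inv. field. now apply pow_nonzero, Rgt_not_eq. }
  rewrite Rsum_scal_l, Rpow_mult_distr, <- pow_mult.
  unfold lead, interior_remainder. fold d.
  set (X := Rsum _ (S k)).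
  assert (E : (-1) ^ a * (-1) ^ c * (-1) ^ (jj * n) = 1) by now rewrite <- !pow_add, pow_m1_even.
  transitivity (2 / INR (k + 2) * (smat k a 0 * smat k c 0 * d ^ n *
    (1 + (-1) ^ a * (-1) ^ c * (-1) ^ (jj * n)) + d ^ n * X)); [ring|].
  rewrite E. unfold Rdiv. ring.
Qed.

Lemma Rabs_interior_remainder_le k jj a c n :
  Rabs (interior_remainder k jj a c n) <=
  2 / INR (k + 2) * Rsum (fun b => if interior k b then Rabs (eig k jj b / qdim k jj) ^ n else 0)
    (S k).
Proof.
  assert (Hc0 : 0 < 2 / INR (k + 2)) by (apply Rdiv_lt_0_compat; [lra | apply INR_k2_pos]).
  unfold interior_remainder. rewrite Rabs_mult, (Rabs_right (2 / INR (k + 2))) by lra.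
  apply Rmult_le_compat_l; [lra|].
  eapply Rle_trans; [apply Rabs_Rsum_le|]. apply Rsum_le. intros b _.
  destruct (interior k b); [|rewrite Rabs_R0; lra].
  rewrite !Rabs_mult, <- RPow_abs.
  pose proof (Rabs_smat_le_1 k a b). pose proof (Rabs_smat_le_1 k c b).
  assert (0 <= Rabs (eig k jj b / qdim k jj) ^ n) by (apply pow_le, Rabs_pos).
  pose proof (Rabs_pos (smat k a b)). pose proof (Rabs_pos (smat k c b)).
  assert (Rabs (smat k a b) * Rabs (smat k c b) <= 1) by nra. nra.
Qed.

Lemma interior_remainder_small k jj : (1 <= jj)%nat -> (jj + 1 <= k)%nat ->
  forall del, 0 < del -> exists N, forall a c n, (N <= n)%nat ->
  Rabs (interior_remainder k jj a c n) <= del.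
Proof.
  intros H1 H2 del Hdel.
  set (c0 := 2 / INR (k + 2)).
  assert (Hc0 : 0 < c0) by (apply Rdiv_lt_0_compat; [lra | apply INR_k2_pos]).
  set (r := fun b => Rabs (eig k jj b / qdim k jj)).
  destruct (Rsum_eventually_small (fun b n => if interior k b then r b ^ n else 0) (S k))
    with (del := del / c0) as [N HN].
  - intros b Hb e He. unfold interior.
    destruct (Nat.eqb_spec b 0), (Nat.eqb_spec b k); simpl;
      try (exists 0%nat; intros; rewrite Rabs_R0; lra).
    assert (Hd : 1 < qdim k jj) by now apply qdim_gt_1.
    assert (Hr : Rabs (r b) < 1).
    { unfold r. rewrite Rabs_Rabsolu, Rabs_div, (Rabs_right (qdim k jj)) by lra.
      pose proof (eig_gap k jj b H1 H2 ltac:(lia) ltac:(lia)).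
      apply Rlt_div_l; lra. }
    destruct (pow_lt_1_zero _ Hr e He) as [N HN]. exists N. intros. left. apply HN. lia.
  - apply Rdiv_lt_0_compat; auto.
  - exists N. intros a c n Hn. specialize (HN n Hn).
    eapply Rle_trans; [apply Rabs_interior_remainder_le|]. fold c0.
    apply Rle_trans with (c0 * (del / c0)); [|right; field; lra].
    apply Rmult_le_compat_l; [lra|]. eapply Rle_trans; [apply Rle_abs | exact HN].
Qed.

Lemma Rabs_div_le e c Pm r : 0 < Pm -> Pm <= c -> Rabs e <= r * Pm -> Rabs (e / c) <= r.
Proof.
  intros HPm Hc He. unfold Rdiv. rewrite Rabs_mult, Rabs_inv, (Rabs_right c) by lra.
  apply Rle_div_l; [lra|]. pose proof (Rabs_pos e).
  assert (0 <= r) by (apply (Rmult_le_reg_r Pm); lra). nra.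
Qed.

Section AlphaExpansion.

Variables (k jj JJ al LA LB N : nat) (r : R).
Hypothesis Hjj : (1 <= jj)%nat.
Hypothesis Hjk : (jj + 1 <= k)%nat.
Hypothesis HJ : (JJ <= k)%nat.
Hypothesis Hal : (al <= k)%nat.
Hypothesis Hsmall : forall a c n, (N <= n)%nat ->
  Rabs (interior_remainder k jj a c n) <= r * lead k 0 0.
Hypothesis HLA : (N <= LA)%nat.
Hypothesis HLB : (N <= LB)%nat.
Hypothesis Hmn : (0 < m_alpha k jj LA al * n_alpha k jj JJ LB al)%nat.
Hypothesis HD : (0 < Dpaths k jj (LA + LB) JJ)%nat.

Lemma verlinde_relative a c n : (a <= k)%nat -> (c <= k)%nat -> (N <= n)%nat ->
  Nat.even (a + c + jj * n) = true ->
  exists u, verlinde k jj a c n = qdim k jj ^ n * lead k a c * (1 + u) /\ Rabs u <= r.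
Proof.
  intros Ha Hc Hn Hpar.
  pose proof (lead_pos k a c Ha Hc). pose proof (lead_pos k 0 0 ltac:(lia) ltac:(lia)).
  exists (interior_remainder k jj a c n / lead k a c). split.
  - pose proof (qdim_gt_1 k jj Hjj Hjk).
    rewrite verlinde_decomp; [field; lra | lia | lra | exact Hpar].
  - eapply Rabs_div_le; [| apply lead_ge | apply Hsmall]; auto.
Qed.

Lemma alpha_parities :
  Nat.even (0 + al + jj * LA) = true /\ Nat.even (al + JJ + jj * LB) = true /\
  Nat.even (0 + JJ + jj * (LA + LB)) = true.
Proof.
  assert (Pm : Nat.even (al + jj * LA) = true).
  { apply (Dpaths_parity k). intros E. unfold m_alpha in Hmn. rewrite E in Hmn. lia. }
  assert (PD : Nat.even (JJ + jj * (LA + LB)) = true) by (apply (Dpaths_parity k); lia).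
  split; [exact Pm|]. split; [|exact PD].
  apply Nat.even_spec in Pm as [p Hp]. apply Nat.even_spec in PD as [q Hq].
  apply Nat.even_spec. exists (p + q - jj * LA)%nat. rewrite Nat.mul_add_distr_l in Hq. lia.
Qed.

Lemma alpha_expansions : exists u1 u2 u3,
  Rabs u1 <= r /\ Rabs u2 <= r /\ Rabs u3 <= r /\
  INR (m_alpha k jj LA al) = qdim k jj ^ LA * lead k 0 al * (1 + u1) /\
  INR (n_alpha k jj JJ LB al) = qdim k jj ^ LB * (lead k 0 al * qdim k JJ) * (1 + u2) /\
  INR (Dpaths k jj (LA + LB) JJ) =
    qdim k jj ^ (LA + LB) * (lead k 0 al * qdim k JJ / qdim k al) * (1 + u3).
Proof.
  destruct alpha_parities as [P1 [P2 P3]].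
  destruct (verlinde_relative 0 al LA ltac:(lia) Hal HLA P1) as [u1 [E1 B1]].
  destruct (verlinde_relative al JJ LB Hal HJ HLB P2) as [u2 [E2 B2]].
  destruct (verlinde_relative 0 JJ (LA + LB) ltac:(lia) HJ ltac:(lia) P3) as [u3 [E3 B3]].
  exists u1, u2, u3. repeat split; auto.
  - unfold m_alpha. rewrite Dpaths_verlinde by lia. exact E1.
  - rewrite n_alpha_verlinde, E2, lead_qdim_r by lia. reflexivity.
  - rewrite Dpaths_verlinde, E3 by lia. do 3 f_equal.
    unfold lead. rewrite !qdim_smat. pose proof (smat_0_0_pos k). pose proof (INR_k2_pos k).
    assert (0 < smat k al 0) by (rewrite smat_0_r; apply sin_S_theta_pos; auto).
    field. repeat split; lra.
Qed.

End AlphaExpansion.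

Lemma max_m_n_le_Dpaths k jj JJ LA LB al : (jj <= k)%nat -> (JJ <= k)%nat -> (al <= k)%nat ->
  (0 < m_alpha k jj LA al * n_alpha k jj JJ LB al)%nat ->
  (Nat.max (m_alpha k jj LA al) (n_alpha k jj JJ LB al) <= Dpaths k jj (LA + LB) JJ)%nat.
Proof.
  intros Hjj HJ Hal Hmn.
  assert (m_alpha k jj LA al * n_alpha k jj JJ LB al <= Dpaths k jj (LA + LB) JJ)%nat.
  { apply INR_le. rewrite <- Rsum_m_alpha_n_alpha, mult_INR by auto.
    apply (Rsum_term_le (fun a => INR (m_alpha k jj LA a) * INR (n_alpha k jj JJ LB a))); [lia|].
    intros. apply Rmult_le_pos; apply pos_INR. }
  set (m := m_alpha k jj LA al) in *. set (n := n_alpha k jj JJ LB al) in *.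
  destruct m as [|m]; [lia|]. destruct n as [|n]; [lia|].
  apply Nat.max_lub; nia.
Qed.

(** * Harmonic numbers and logarithms *)

Lemma ln_le_sub_1 y : 0 < y -> ln y <= y - 1.
Proof.
  intros Hy. destruct (Req_dec (ln y) 0) as [E|E].
  - assert (y = 1) by (rewrite <- (exp_ln y Hy), E; apply exp_0). lra.
  - pose proof (exp_ineq1 _ E). rewrite exp_ln in H; auto. lra.
Qed.

Lemma harmonic_S n : harmonic (S n) = harmonic n + / INR (S n).
Proof.
  unfold harmonic. rewrite seq_S, map_app, fold_right_app. simpl.
  rewrite fold_right_Rplus_init. lra.
Qed.

Lemma ln_S_sub_bounds i : (1 <= i)%nat ->
  / INR (S i) <= ln (INR (S i)) - ln (INR i) <= / INR i.
Proof.
  intros Hi. assert (H1 : 1 <= INR i) by (apply (le_INR 1); auto).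
  rewrite S_INR. split.
  - pose proof (ln_le_sub_1 (INR i / (INR i + 1))) as L.
    rewrite ln_div in L by lra.
    assert (INR i / (INR i + 1) - 1 = - / (INR i + 1)) by (field; lra).
    assert (0 < INR i / (INR i + 1)) by (apply Rdiv_lt_0_compat; lra). lra.
  - pose proof (ln_le_sub_1 ((INR i + 1) / INR i)) as L.
    rewrite ln_div in L by lra.
    assert ((INR i + 1) / INR i - 1 = / INR i) by (field; lra).
    assert (0 < (INR i + 1) / INR i) by (apply Rdiv_lt_0_compat; lra). lra.
Qed.

Lemma harmonic_sub_bounds M j : (1 <= M)%nat ->
  ln (INR (M + j + 1)) - ln (INR (M + 1)) <= harmonic (M + j) - harmonic M <=
  ln (INR (M + j)) - ln (INR M).
Proof.
  intros HM. induction j as [|j IH].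
  - rewrite !Nat.add_0_r. lra.
  - replace (M + S j)%nat with (S (M + j)) by lia. rewrite harmonic_S.
    pose proof (ln_S_sub_bounds (M + j) ltac:(lia)).
    pose proof (ln_S_sub_bounds (S (M + j)) ltac:(lia)).
    replace (M + j + 1)%nat with (S (M + j)) in IH by lia.
    replace (S (M + j) + 1)%nat with (S (S (M + j))) by lia.
    lra.
Qed.

Lemma harmonic_sub_ln M D : (1 <= M)%nat -> (M <= D)%nat ->
  Rabs (harmonic D - harmonic M - ln (INR D / INR M)) <= / INR M.
Proof.
  intros HM HMD.
  assert (H1 : 1 <= INR M) by (apply (le_INR 1); auto).
  assert (H2 : INR M <= INR D) by (apply le_INR; auto).
  rewrite ln_div by lra.
  replace D with (M + (D - M))%nat by lia.
  pose proof (harmonic_sub_bounds M (D - M) HM).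
  pose proof (ln_S_sub_bounds M HM) as HS. rewrite <- Nat.add_1_r in HS.
  assert (ln (INR (M + (D - M))) <= ln (INR (M + (D - M) + 1))).
  { apply ln_le; [rewrite plus_INR; pose proof (pos_INR (D - M)); lra|].
    apply le_INR; lia. }
  apply Rabs_le. split; lra.
Qed.

Lemma ln_div_le x y : 0 < x -> 0 < y -> ln (x / y) <= (x - y) / y.
Proof.
  intros Hx Hy. eapply Rle_trans; [apply ln_le_sub_1, Rdiv_lt_0_compat; auto|].
  right. field. lra.
Qed.

Lemma Rabs_ln_ratio_le u v : Rabs u <= 1 / 2 -> Rabs v <= 1 / 2 ->
  Rabs (ln ((1 + u) / (1 + v))) <= 2 * (Rabs u + Rabs v).
Proof.
  intros Hu Hv.
  apply Rabs_le_between in Hu. apply Rabs_le_between in Hv.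
  assert (Huv : Rabs (u - v) <= Rabs u + Rabs v).
  { unfold Rminus. eapply Rle_trans; [apply Rabs_triang|]. rewrite Rabs_Ropp. lra. }
  apply Rabs_le_between in Huv.
  assert (Bound : forall w y, 1 / 2 <= 1 + y -> Rabs w <= Rabs u + Rabs v ->
    w / (1 + y) <= 2 * (Rabs u + Rabs v)).
  { intros w y Hy Hw. apply Rabs_le_between in Hw. apply Rle_div_l; [lra|].
    pose proof (Rabs_pos u). pose proof (Rabs_pos v). nra. }
  assert (A : ln ((1 + u) / (1 + v)) <= 2 * (Rabs u + Rabs v)).
  { eapply Rle_trans; [apply ln_div_le; lra|].
    apply Bound; [lra|]. apply Rabs_le; lra. }
  assert (B : ln ((1 + v) / (1 + u)) <= 2 * (Rabs u + Rabs v)).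
  { eapply Rle_trans; [apply ln_div_le; lra|].
    apply Bound; [lra|]. apply Rabs_le; lra. }
  rewrite ln_div in * by lra. apply Rabs_le. lra.
Qed.

Lemma Rabs_Rmin_sub_le a b a0 b0 t : Rabs (a - a0) <= t -> Rabs (b - b0) <= t ->
  Rabs (Rmin a b - Rmin a0 b0) <= t.
Proof.
  intros Ha Hb. apply Rabs_le_between in Ha. apply Rabs_le_between in Hb.
  unfold Rmin. destruct (Rle_dec a b), (Rle_dec a0 b0); apply Rabs_le; lra.
Qed.

(** * Estimating phi_alpha *)

Definition page_term (m n : nat) : R :=
  Rmin ((INR m - 1) / (2 * INR n)) ((INR n - 1) / (2 * INR m)).

(* phi_alpha of the paper, using Psi(D + 1) - Psi(M + 1) = H_D - H_M. *)
Definition phi_entropy (da : R) (m n D : nat) : R :=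
  harmonic D - harmonic (Nat.max m n) - page_term m n + ln da.

Definition entropy_limit (d dJ : R) (LA LB : nat) : R :=
  match Nat.compare LA LB with
  | Lt => INR LA * ln d
  | Eq => INR LA * ln d - / (2 * dJ)
  | Gt => INR LB * ln d + ln dJ
  end.

Lemma one_plus_small_bounds u r : Rabs u <= r -> r <= 1 / 2 -> 1 / 2 <= 1 + u <= 3 / 2.
Proof. intros Hu Hr. apply Rabs_le_between in Hu. lra. Qed.

Lemma page_term_nonneg m n : (1 <= m)%nat -> (1 <= n)%nat -> 0 <= page_term m n.
Proof.
  intros Hm Hn. apply (le_INR 1) in Hm, Hn. simpl in Hm, Hn.
  apply Rmin_glb; apply Rmult_le_pos; try lra; left; apply Rinv_0_lt_compat; lra.
Qed.

Lemma page_term_le_l m n : (1 <= n)%nat -> page_term m n <= INR m / INR n.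
Proof.
  intros Hn. apply (le_INR 1) in Hn. simpl in Hn.
  eapply Rle_trans; [apply Rmin_l|]. unfold Rdiv. rewrite Rinv_mult.
  pose proof (pos_INR m). assert (0 < / INR n) by (apply Rinv_0_lt_compat; lra). nra.
Qed.

Lemma page_term_le_r m n : (1 <= m)%nat -> page_term m n <= INR n / INR m.
Proof.
  intros Hm. unfold page_term. rewrite Rmin_comm. fold (page_term n m). now apply page_term_le_l.
Qed.

Lemma INR_le_of_div_le_1 m n : (1 <= n)%nat -> INR m / INR n <= 1 -> (m <= n)%nat.
Proof.
  intros Hn H. apply (le_INR 1) in Hn. simpl in Hn.
  apply INR_le. apply Rle_div_l in H; lra.
Qed.

Lemma INR_pos_ge_1 m : 0 < INR m -> (1 <= m)%nat.
Proof. intros H. apply (INR_lt 0 m) in H. lia. Qed.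

Section PhiEstimate.

(* d, da and dJ stand for d_j, d_alpha and d_J; u1, u2 and u3 are the relative errors of the
   dominant terms of m_alpha, n_alpha and D_J. *)

Variables (d da dJ P r u1 u2 u3 : R) (m n D LA LB : nat).
Hypothesis Hd : 1 < d.
Hypothesis Hda : 0 < da.
Hypothesis HdJ : 1 <= dJ.
Hypothesis HP : 0 < P.
Hypothesis Hr : r <= 1 / 2.
Hypothesis Hu1 : Rabs u1 <= r.
Hypothesis Hu2 : Rabs u2 <= r.
Hypothesis Hu3 : Rabs u3 <= r.
Hypothesis Hm : INR m = d ^ LA * P * (1 + u1).
Hypothesis Hn : INR n = d ^ LB * (P * dJ) * (1 + u2).
Hypothesis HD : INR D = d ^ (LA + LB) * (P * dJ / da) * (1 + u3).
Hypothesis HmnD : (Nat.max m n <= D)%nat.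

Let pow_d_pos j : 0 < d ^ j.
Proof. apply pow_lt. lra. Qed.

Let U1 := one_plus_small_bounds u1 r Hu1 Hr.
Let U2 := one_plus_small_bounds u2 r Hu2 Hr.
Let U3 := one_plus_small_bounds u3 r Hu3 Hr.

Lemma INR_m_lb : d ^ LA * P / 2 <= INR m.
Proof.
  rewrite Hm. pose proof (pow_d_pos LA). pose proof U1.
  unfold Rdiv. apply Rmult_le_compat_l; [apply Rmult_le_pos|]; lra.
Qed.

Lemma INR_n_lb : d ^ LB * P / 2 <= INR n.
Proof.
  rewrite Hn. pose proof (pow_d_pos LB). pose proof U2.
  apply Rle_trans with (d ^ LB * P * (1 + u2)).
  - unfold Rdiv. apply Rmult_le_compat_l; [apply Rmult_le_pos|]; lra.
  - apply Rmult_le_compat_r; [lra|]. apply Rmult_le_compat_l; [lra|]. nra.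
Qed.

Lemma m_ge_1 : (1 <= m)%nat.
Proof.
  apply INR_pos_ge_1. pose proof INR_m_lb. pose proof (pow_d_pos LA).
  assert (0 < d ^ LA * P) by nra. lra.
Qed.

Lemma n_ge_1 : (1 <= n)%nat.
Proof.
  apply INR_pos_ge_1. pose proof INR_n_lb. pose proof (pow_d_pos LB).
  assert (0 < d ^ LB * P) by nra. lra.
Qed.

Lemma INR_D_pos : 0 < INR D.
Proof.
  rewrite HD. pose proof (pow_d_pos (LA + LB)). pose proof U3.
  assert (0 < P * dJ / da) by (apply Rdiv_lt_0_compat; nra).
  apply Rmult_lt_0_compat; [apply Rmult_lt_0_compat|]; lra.
Qed.

Lemma inv_m_le : / INR m <= 2 / (P * d ^ LA).
Proof.
  pose proof INR_m_lb. pose proof (pow_d_pos LA).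
  replace (2 / (P * d ^ LA)) with (/ (d ^ LA * P / 2)) by (field; lra).
  apply Rinv_le_contravar; [nra | lra].
Qed.

Lemma inv_n_le : / INR n <= 2 / (P * d ^ LB).
Proof.
  pose proof INR_n_lb. pose proof (pow_d_pos LB).
  replace (2 / (P * d ^ LB)) with (/ (d ^ LB * P / 2)) by (field; lra).
  apply Rinv_le_contravar; [nra | lra].
Qed.

Lemma ln_D_div_n : Rabs (ln (INR D / INR n) + ln da - INR LA * ln d) <= 4 * r.
Proof.
  pose proof (pow_d_pos LA). pose proof (pow_d_pos LB). pose proof U2. pose proof U3.
  assert (E : INR D / INR n * da = d ^ LA * ((1 + u3) / (1 + u2))).
  { rewrite HD, Hn, pow_add. field. repeat split; lra. }
  assert (0 < INR n) by (pose proof INR_n_lb; nra).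
  pose proof INR_D_pos.
  rewrite <- ln_mult, E, ln_mult, ln_pow by (try apply Rdiv_lt_0_compat; nra).
  replace (INR LA * ln d + ln ((1 + u3) / (1 + u2)) - INR LA * ln d)
    with (ln ((1 + u3) / (1 + u2))) by ring.
  eapply Rle_trans; [apply Rabs_ln_ratio_le; lra | lra].
Qed.

Lemma ln_D_div_m : Rabs (ln (INR D / INR m) + ln da - INR LB * ln d - ln dJ) <= 4 * r.
Proof.
  pose proof (pow_d_pos LA). pose proof (pow_d_pos LB). pose proof U1. pose proof U3.
  assert (E : INR D / INR m * da / dJ = d ^ LB * ((1 + u3) / (1 + u1))).
  { rewrite HD, Hm, pow_add. field. repeat split; lra. }
  assert (0 < INR m) by (pose proof INR_m_lb; nra).
  pose proof INR_D_pos.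
  assert (0 < INR D / INR m) by (apply Rdiv_lt_0_compat; lra).
  replace (ln (INR D / INR m) + ln da - INR LB * ln d - ln dJ)
    with (ln (INR D / INR m * da / dJ) - INR LB * ln d)
    by (rewrite ln_div, ln_mult; [ring | lra | lra | apply Rmult_lt_0_compat; lra | lra]).
  rewrite E, ln_mult, ln_pow by (try apply Rdiv_lt_0_compat; lra).
  replace (INR LB * ln d + ln ((1 + u3) / (1 + u1)) - INR LB * ln d)
    with (ln ((1 + u3) / (1 + u1))) by ring.
  eapply Rle_trans; [apply Rabs_ln_ratio_le; lra | lra].
Qed.

Lemma ratio_le_3 x y : Rabs x <= r -> Rabs y <= r -> (1 + x) / (1 + y) <= 3.
Proof.
  intros Hx Hy.
  pose proof (one_plus_small_bounds x r Hx Hr). pose proof (one_plus_small_bounds y r Hy Hr).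
  apply Rle_div_l; lra.
Qed.

Lemma Rabs_ratio_sub_1_le x y : Rabs x <= r -> Rabs y <= r -> Rabs ((1 + x) / (1 + y) - 1) <= 4 * r.
Proof.
  intros Hx Hy. pose proof (one_plus_small_bounds y r Hy Hr).
  replace ((1 + x) / (1 + y) - 1) with ((x - y) / (1 + y)) by (field; lra).
  unfold Rdiv. rewrite Rabs_mult, Rabs_inv, (Rabs_right (1 + y)) by lra.
  apply Rle_div_l; [lra|].
  apply Rabs_le_between in Hx. apply Rabs_le_between in Hy.
  apply Rabs_le. nra.
Qed.

Lemma ratio_m_n g : LB = (LA + g)%nat -> INR m / INR n = (1 + u1) / (1 + u2) / (dJ * d ^ g).
Proof.
  intros ->. pose proof (pow_d_pos LA). pose proof (pow_d_pos g). pose proof U2.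
  rewrite Hm, Hn, pow_add. field. repeat split; lra.
Qed.

Lemma ratio_n_m g : LA = (LB + g)%nat -> INR n / INR m = dJ * ((1 + u2) / (1 + u1)) / d ^ g.
Proof.
  intros ->. pose proof (pow_d_pos LB). pose proof (pow_d_pos g). pose proof U1.
  rewrite Hm, Hn, pow_add. field. repeat split; lra.
Qed.

Lemma ratio_m_n_le g : LB = (LA + g)%nat -> INR m / INR n <= 3 / d ^ g.
Proof.
  intros HLB. rewrite (ratio_m_n g HLB). pose proof (pow_d_pos g). pose proof U1. pose proof U2.
  unfold Rdiv at 2 3. apply Rmult_le_compat.
  - apply Rlt_le, Rdiv_lt_0_compat; lra.
  - apply Rlt_le, Rinv_0_lt_compat. nra.
  - now apply ratio_le_3.
  - apply Rinv_le_contravar; nra.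
Qed.

Lemma ratio_n_m_le g : LA = (LB + g)%nat -> INR n / INR m <= 3 * dJ / d ^ g.
Proof.
  intros HLA. rewrite (ratio_n_m g HLA). pose proof (pow_d_pos g).
  apply Rmult_le_compat_r; [apply Rlt_le, Rinv_0_lt_compat; lra|].
  rewrite (Rmult_comm 3 dJ). apply Rmult_le_compat_l; [lra|]. now apply ratio_le_3.
Qed.

Lemma phi_close_lt g : LB = (LA + g)%nat -> 3 <= d ^ g ->
  Rabs (phi_entropy da m n D - INR LA * ln d) <= / INR n + 4 * r + 3 / d ^ g.
Proof.
  intros HLB Hg. pose proof m_ge_1. pose proof n_ge_1.
  pose proof (ratio_m_n_le g HLB).
  assert (3 / d ^ g <= 1) by (apply Rle_div_l; [apply pow_d_pos | lra]).
  assert (Hmn : (m <= n)%nat) by (apply INR_le_of_div_le_1; auto; lra).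
  unfold phi_entropy. rewrite Nat.max_r by auto.
  pose proof (page_term_nonneg m n ltac:(auto) ltac:(auto)).
  pose proof (page_term_le_l m n ltac:(auto)).
  pose proof (harmonic_sub_ln n D ltac:(auto) ltac:(lia)) as Hh.
  pose proof ln_D_div_n as Hl.
  apply Rabs_le_between in Hh. apply Rabs_le_between in Hl. apply Rabs_le. lra.
Qed.

Lemma phi_close_gt g : LA = (LB + g)%nat -> 3 * dJ <= d ^ g ->
  Rabs (phi_entropy da m n D - (INR LB * ln d + ln dJ)) <= / INR m + 4 * r + 3 * dJ / d ^ g.
Proof.
  intros HLA Hg. pose proof m_ge_1. pose proof n_ge_1.
  pose proof (ratio_n_m_le g HLA).
  assert (3 * dJ / d ^ g <= 1) by (apply Rle_div_l; [apply pow_d_pos | lra]).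
  assert (Hnm : (n <= m)%nat) by (apply INR_le_of_div_le_1; auto; lra).
  unfold phi_entropy. rewrite Nat.max_l by auto.
  pose proof (page_term_nonneg m n ltac:(auto) ltac:(auto)).
  pose proof (page_term_le_r m n ltac:(auto)).
  pose proof (harmonic_sub_ln m D ltac:(auto) ltac:(lia)) as Hh.
  pose proof ln_D_div_m as Hl.
  apply Rabs_le_between in Hh. apply Rabs_le_between in Hl. apply Rabs_le. lra.
Qed.

Lemma ln_D_div_max : LA = LB ->
  Rabs (ln (INR D / INR (Nat.max m n)) + ln da - INR LA * ln d) <= 4 * r.
Proof.
  intros HL. pose proof ln_D_div_n as Hn'. pose proof ln_D_div_m as Hm'. rewrite <- HL in Hm'.
  destruct (Nat.max_spec m n) as [[_ E]|[Hnm E]]; rewrite E; [exact Hn'|].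
  pose proof INR_D_pos. pose proof m_ge_1. pose proof n_ge_1.
  apply (le_INR 1) in H0, H1. simpl in H0, H1.
  assert (ln (INR D / INR m) <= ln (INR D / INR n)).
  { apply ln_le; [apply Rdiv_lt_0_compat; lra|].
    apply Rmult_le_compat_l; [lra|]. apply Rinv_le_contravar; [lra | now apply le_INR]. }
  assert (0 <= ln dJ) by (rewrite <- ln_1; apply ln_le; lra).
  apply Rabs_le_between in Hn'. apply Rabs_le_between in Hm'. apply Rabs_le. lra.
Qed.

(* At L_A = L_B, m/n -> 1/d_J, so the Page term tends to min(1/(2 d_J), d_J/2). *)
Lemma page_term_close_eq : LA = LB ->
  Rabs (page_term m n - / (2 * dJ)) <= 2 * r * dJ + / (2 * INR n) + / (2 * INR m).
Proof.
  intros HL. pose proof m_ge_1 as Hm1. pose proof n_ge_1 as Hn1.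
  apply (le_INR 1) in Hm1, Hn1. simpl in Hm1, Hn1.
  assert (Hr0 : 0 <= r) by (pose proof (Rabs_pos u1); lra).
  assert (Q1 : Rabs (INR m / INR n - / dJ) <= 4 * r).
  { rewrite (ratio_m_n 0 ltac:(lia)), pow_O, Rmult_1_r.
    replace ((1 + u1) / (1 + u2) / dJ - / dJ) with (((1 + u1) / (1 + u2) - 1) / dJ) by (field; lra).
    unfold Rdiv at 1. rewrite Rabs_mult, Rabs_inv, (Rabs_right dJ) by lra.
    apply Rle_div_l; [lra|]. pose proof (Rabs_ratio_sub_1_le u1 u2 Hu1 Hu2). nra. }
  assert (Q2 : Rabs (INR n / INR m - dJ) <= 4 * r * dJ).
  { rewrite (ratio_n_m 0 ltac:(lia)), pow_O, Rdiv_1_r.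
    replace (dJ * ((1 + u2) / (1 + u1)) - dJ) with (dJ * ((1 + u2) / (1 + u1) - 1)) by ring.
    rewrite Rabs_mult, (Rabs_right dJ) by lra.
    pose proof (Rabs_ratio_sub_1_le u2 u1 Hu2 Hu1). nra. }
  unfold page_term.
  rewrite <- (Rmin_left (/ (2 * dJ)) (dJ / 2)).
  2:{ assert (/ (2 * dJ) <= / 2) by (apply Rinv_le_contravar; lra). lra. }
  apply Rabs_Rmin_sub_le.
  - replace ((INR m - 1) / (2 * INR n) - / (2 * dJ))
      with ((INR m / INR n - / dJ) / 2 - / (2 * INR n)) by (field; lra).
    apply Rabs_le_between in Q1. apply Rabs_le.
    assert (0 < / (2 * INR n)) by (apply Rinv_0_lt_compat; lra).
    assert (0 < / (2 * INR m)) by (apply Rinv_0_lt_compat; lra).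
    assert (r <= r * dJ) by nra. lra.
  - replace ((INR n - 1) / (2 * INR m) - dJ / 2)
      with ((INR n / INR m - dJ) / 2 - / (2 * INR m)) by (field; lra).
    apply Rabs_le_between in Q2. apply Rabs_le.
    assert (0 < / (2 * INR n)) by (apply Rinv_0_lt_compat; lra).
    assert (0 < / (2 * INR m)) by (apply Rinv_0_lt_compat; lra). lra.
Qed.

Lemma phi_close_eq : LA = LB ->
  Rabs (phi_entropy da m n D - (INR LA * ln d - / (2 * dJ))) <=
  6 * r * dJ + 2 / INR m + 2 / INR n.
Proof.
  intros HL. pose proof m_ge_1 as Hm1. pose proof n_ge_1 as Hn1.
  pose proof (harmonic_sub_ln (Nat.max m n) D ltac:(lia) HmnD) as Hh.
  pose proof (ln_D_div_max HL) as Hl. pose proof (page_term_close_eq HL) as Hp.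
  apply (le_INR 1) in Hm1, Hn1. simpl in Hm1, Hn1.
  assert (/ INR (Nat.max m n) <= / INR n)
    by (apply Rinv_le_contravar; [lra | apply le_INR; lia]).
  assert (Hr0 : 0 <= r) by (pose proof (Rabs_pos u1); lra).
  assert (r <= r * dJ) by nra.
  assert (/ (2 * INR n) <= / INR n) by (apply Rinv_le_contravar; lra).
  assert (/ (2 * INR m) <= / INR m) by (apply Rinv_le_contravar; lra).
  assert (0 < / INR m) by (apply Rinv_0_lt_compat; lra).
  unfold phi_entropy.
  apply Rabs_le_between in Hh. apply Rabs_le_between in Hl. apply Rabs_le_between in Hp.
  apply Rabs_le. unfold Rdiv. lra.
Qed.

Lemma phi_entropy_close g : 3 * dJ <= d ^ g ->
  (LA = LB \/ LB = (LA + g)%nat \/ LA = (LB + g)%nat) ->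
  Rabs (phi_entropy da m n D - entropy_limit d dJ LA LB) <=
  6 * r * dJ + 4 / (P * d ^ LA) + 4 / (P * d ^ LB) + 3 * dJ / d ^ g.
Proof.
  intros Hg Hcases.
  pose proof inv_m_le. pose proof inv_n_le. pose proof (pow_d_pos g).
  assert (Hr0 : 0 <= r) by (pose proof (Rabs_pos u1); lra).
  assert (r <= r * dJ) by nra.
  assert (0 <= 4 / (P * d ^ LA)) by (apply Rdiv_le_0_compat; [lra | apply Rmult_lt_0_compat; auto]).
  assert (0 <= 4 / (P * d ^ LB)) by (apply Rdiv_le_0_compat; [lra | apply Rmult_lt_0_compat; auto]).
  assert (0 <= 3 * dJ / d ^ g) by (apply Rdiv_le_0_compat; lra).
  assert (3 / d ^ g <= 3 * dJ / d ^ g)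
    by (apply Rmult_le_compat_r; [apply Rlt_le, Rinv_0_lt_compat|]; lra).
  assert (g <> 0%nat) by (intros ->; simpl in Hg; lra).
  unfold entropy_limit.
  destruct Hcases as [HL | [HL | HL]].
  - replace (Nat.compare LA LB) with Eq by (rewrite HL; symmetry; apply Nat.compare_refl).
    pose proof (phi_close_eq HL). unfold Rdiv in *. lra.
  - replace (Nat.compare LA LB) with Lt by (symmetry; apply Nat.compare_lt_iff; lia).
    assert (3 <= d ^ g) by lra.
    pose proof (phi_close_lt g HL ltac:(lra)). unfold Rdiv in *. lra.
  - replace (Nat.compare LA LB) with Gt by (symmetry; apply Nat.compare_gt_iff; lia).
    pose proof (phi_close_gt g HL Hg). unfold Rdiv in *. lra.
Qed.

End PhiEstimate.

(** * Averaging over alpha *)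

Lemma Rabs_weighted_mean_sub_le (w ph : nat -> R) K X t :
  (forall a, (a < K)%nat -> 0 <= w a) -> Rsum w K = 1 ->
  (forall a, (a < K)%nat -> 0 < w a -> Rabs (ph a - X) <= t) ->
  Rabs (Rsum (fun a => w a * ph a) K - X) <= t.
Proof.
  intros Hw H1 Hph.
  replace (Rsum (fun a => w a * ph a) K - X) with (Rsum (fun a => w a * (ph a - X)) K)
    by (rewrite (Rsum_ext _ (fun a => w a * ph a - X * w a)), Rsum_minus, Rsum_scal_l, H1
          by (intros; ring); ring).
  eapply Rle_trans; [apply Rabs_Rsum_le|].
  apply Rle_trans with (Rsum (fun a => t * w a) K); [|rewrite Rsum_scal_l, H1; lra].
  apply Rsum_le. intros a Ha. rewrite Rabs_mult, (Rabs_right (w a)) by (apply Rle_ge; auto).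
  destruct (Hw a Ha) as [Hpos|Hz].
  - rewrite Rmult_comm. apply Rmult_le_compat_r; auto.
  - rewrite <- Hz. lra.
Qed.

Lemma avgEntropy_close_of_phi k jj JJ LA LB X t : (jj <= k)%nat -> (JJ <= k)%nat ->
  (0 < Dpaths k jj (LA + LB) JJ)%nat ->
  (forall al, (al <= k)%nat -> (0 < m_alpha k jj LA al * n_alpha k jj JJ LB al)%nat ->
     Rabs (phi_entropy (qdim k al) (m_alpha k jj LA al) (n_alpha k jj JJ LB al)
             (Dpaths k jj (LA + LB) JJ) - X) <= t) ->
  Rabs (avgEntropy k jj JJ (LA + LB) LA - X) <= t.
Proof.
  intros Hjj HJ HD Hphi. unfold avgEntropy. cbv zeta.
  replace (LA + LB - LA)%nat with LB by lia.
  set (D := Dpaths k jj (LA + LB) JJ) in *.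
  assert (HD' : 0 < INR D) by (apply lt_0_INR; auto).
  set (w := fun a => INR (m_alpha k jj LA a) * INR (n_alpha k jj JJ LB a) / INR D).
  rewrite (Rsum_ext _ (fun a => w a * phi_entropy (qdim k a) (m_alpha k jj LA a)
                                     (n_alpha k jj JJ LB a) D)).
  2:{ intros a _. unfold w, phi_entropy, page_term.
      rewrite !Nat.add_1_r. unfold digamma_nat. rewrite !Nat.sub_succ, !Nat.sub_0_r.
      destruct (Nat.ltb_spec 0 (m_alpha k jj LA a * n_alpha k jj JJ LB a)); [ring|].
      rewrite <- mult_INR. replace (m_alpha k jj LA a * n_alpha k jj JJ LB a)%nat with 0%nat by lia.
      simpl. field. lra. }
  apply Rabs_weighted_mean_sub_le.
  - intros a _. apply Rdiv_le_0_compat; [apply Rmult_le_pos; apply pos_INR | lra].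
  - unfold w, Rdiv. rewrite (Rsum_ext _ (fun a => / INR D *
        (INR (m_alpha k jj LA a) * INR (n_alpha k jj JJ LB a)))) by (intros; ring).
    rewrite Rsum_scal_l, Rsum_m_alpha_n_alpha by auto. fold D. field. lra.
  - intros a Ha Hw. apply Hphi; [lia|].
    unfold w in Hw. rewrite <- mult_INR in Hw.
    destruct (Nat.eq_dec (m_alpha k jj LA a * n_alpha k jj JJ LB a) 0) as [E|E]; [|lia].
    rewrite E in Hw. simpl in Hw. lra.
Qed.

Lemma gap_witness N LA LB : (LA = LB \/ N + LA <= LB \/ N + LB <= LA)%nat ->
  exists g, (N <= g)%nat /\ (LA = LB \/ LB = LA + g \/ LA = LB + g)%nat.
Proof.
  intros [E | [H | H]].
  - exists N. auto.
  - exists (LB - LA)%nat. split; [lia | right; left; lia].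
  - exists (LA - LB)%nat. split; [lia | right; right; lia].
Qed.

Lemma pow_eventually_ge d B : 1 < d -> exists N, forall n, (N <= n)%nat -> B <= d ^ n.
Proof.
  intros Hd. destruct (Pow_x_infinity d ltac:(rewrite Rabs_right; lra) B) as [N HN].
  exists N. intros n Hn. specialize (HN n Hn).
  rewrite Rabs_right in HN by (apply Rle_ge, pow_le; lra). lra.
Qed.

Lemma Rdiv_le_of_denom_ge a c y : 0 <= a -> 0 < c -> c <= y -> a / y <= a / c.
Proof.
  intros Ha Hc Hy. apply Rmult_le_compat_l; [lra|]. apply Rinv_le_contravar; lra.
Qed.

Lemma error_budget t dJ Pm P r x y z : 0 < t -> 1 <= dJ -> 0 < Pm <= P -> r <= t / (24 * dJ) ->
  16 / (t * Pm) <= x -> 16 / (t * Pm) <= y -> 12 * dJ / t <= z ->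
  6 * r * dJ + 4 / (P * x) + 4 / (P * y) + 3 * dJ / z <= t.
Proof.
  intros Ht HdJ HP Hr Hx Hy Hz.
  assert (6 * r * dJ <= t / 4).
  { apply (Rmult_le_compat_l (6 * dJ)) in Hr; [|lra].
    replace (6 * dJ * (t / (24 * dJ))) with (t / 4) in Hr by (field; lra). lra. }
  assert (Hw : forall w, 16 / (t * Pm) <= w -> 4 / (P * w) <= t / 4).
  { intros w Hw. assert (0 < 16 / (t * Pm)) by (apply Rdiv_lt_0_compat; nra).
    eapply Rle_trans; [apply Rdiv_le_of_denom_ge with (c := Pm * (16 / (t * Pm))); try lra|].
    - nra.
    - apply Rmult_le_compat; lra.
    - right. field. lra. }
  assert (3 * dJ / z <= t / 4).
  { assert (0 < 12 * dJ / t) by (apply Rdiv_lt_0_compat; lra).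
    eapply Rle_trans; [apply Rdiv_le_of_denom_ge with (c := 12 * dJ / t); lra|].
    right. field. lra. }
  pose proof (Hw x Hx). pose proof (Hw y Hy). lra.
Qed.

Lemma phi_entropy_eventually_close k jj JJ : (1 <= jj)%nat -> (jj + 1 <= k)%nat -> (JJ <= k)%nat ->
  forall t, 0 < t -> exists N, forall LA LB al,
    (N <= LA)%nat -> (N <= LB)%nat -> (LA = LB \/ N + LA <= LB \/ N + LB <= LA)%nat ->
    (0 < Dpaths k jj (LA + LB) JJ)%nat -> (al <= k)%nat ->
    (0 < m_alpha k jj LA al * n_alpha k jj JJ LB al)%nat ->
    Rabs (phi_entropy (qdim k al) (m_alpha k jj LA al) (n_alpha k jj JJ LB al)
            (Dpaths k jj (LA + LB) JJ) - entropy_limit (qdim k jj) (qdim k JJ) LA LB) <= t.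
Proof.
  intros Hjj Hjk HJ t Ht.
  set (d := qdim k jj). set (dJ := qdim k JJ). set (Pm := lead k 0 0).
  assert (Hd : 1 < d) by now apply qdim_gt_1.
  assert (HdJ : 1 <= dJ) by now apply qdim_ge_1.
  assert (HPm : 0 < Pm) by (apply lead_pos; lia).
  set (r := Rmin (1 / 2) (t / (24 * dJ))).
  assert (Hr : 0 < r) by (apply Rmin_glb_lt; [lra | apply Rdiv_lt_0_compat; lra]).
  destruct (interior_remainder_small k jj Hjj Hjk (r * Pm)) as [N1 HN1]; [nra|].
  destruct (pow_eventually_ge d (16 / (t * Pm)) Hd) as [N2 HN2].
  destruct (pow_eventually_ge d (12 * dJ / t) Hd) as [N3 HN3].
  destruct (pow_eventually_ge d (3 * dJ) Hd) as [N4 HN4].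
  exists (Nat.max N1 (Nat.max N2 (Nat.max N3 N4))).
  intros LA LB al HLA HLB Hgap HD Hal Hmn.
  destruct (gap_witness _ _ _ Hgap) as [g [Hg Hcases]].
  destruct (alpha_expansions k jj JJ al LA LB N1 r Hjj Hjk HJ Hal HN1 ltac:(lia) ltac:(lia) Hmn HD)
    as [u1 [u2 [u3 [B1 [B2 [B3 [Em [En ED]]]]]]]].
  pose proof (qdim_ge_1 k al Hal). pose proof (lead_pos k 0 al ltac:(lia) Hal).
  pose proof (max_m_n_le_Dpaths k jj JJ LA LB al ltac:(lia) HJ Hal Hmn).
  assert (3 * dJ <= d ^ g) by (apply HN4; lia).
  eapply Rle_trans.
  - apply (phi_entropy_close d (qdim k al) dJ (lead k 0 al) r u1 u2 u3) with (g := g);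
      auto; try apply Rmin_l; lra.
  - apply (error_budget t dJ Pm); try lra.
    + split; [lra | apply lead_ge; lia].
    + apply Rmin_r.
    + apply HN2. lia.
    + apply HN2. lia.
    + apply HN3. lia.
Qed.

Lemma avgEntropy_eventually_close k jj JJ : (1 <= jj)%nat -> (jj + 1 <= k)%nat -> (JJ <= k)%nat ->
  forall t, 0 < t -> exists N, forall LA LB,
    (N <= LA)%nat -> (N <= LB)%nat -> (LA = LB \/ N + LA <= LB \/ N + LB <= LA)%nat ->
    (0 < Dpaths k jj (LA + LB) JJ)%nat ->
    Rabs (avgEntropy k jj JJ (LA + LB) LA - entropy_limit (qdim k jj) (qdim k JJ) LA LB) <= t.
Proof.
  intros Hjj Hjk HJ t Ht.
  destruct (phi_entropy_eventually_close k jj JJ Hjj Hjk HJ t Ht) as [N HN].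
  exists N. intros LA LB HLA HLB Hgap HD.
  apply avgEntropy_close_of_phi; [lia | exact HJ | exact HD |].
  intros al Hal Hmn. now apply HN.
Qed.

Lemma INR_ge_eventually c N : 0 < c -> exists N', forall L, (N' <= L)%nat -> INR N <= c * INR L.
Proof.
  intros Hc. destruct (INR_archimed c (INR N) Hc) as [N' HN'].
  exists N'. intros L HL. apply le_INR in HL. nra.
Qed.

Lemma proportional_split_large f N : 0 < f < 1 -> exists N', forall L LA,
  (N' <= L)%nat -> INR LA = f * INR L ->
  (LA <= L)%nat /\ (N <= LA)%nat /\ (N <= L - LA)%nat /\
  (LA = L - LA \/ N + LA <= L - LA \/ N + (L - LA) <= LA)%nat.
Proof.
  intros Hf.
  set (c := Rmin (Rmin f (1 - f)) (if Req_EM_T f (1 / 2) then 1 else Rabs (1 - 2 * f))).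
  assert (Hc : 0 < c).
  { unfold c. repeat apply Rmin_glb_lt; try lra.
    destruct (Req_EM_T f (1 / 2)); [lra | apply Rabs_pos_lt; lra]. }
  destruct (INR_ge_eventually c N Hc) as [N' HN'].
  exists N'. intros L LA HL HLA.
  specialize (HN' L HL). pose proof (pos_INR L).
  assert (c <= f /\ c <= 1 - f) as [Hcf Hcf'].
  { pose proof (Rmin_l (Rmin f (1 - f)) (if Req_EM_T f (1 / 2) then 1 else Rabs (1 - 2 * f))).
    pose proof (Rmin_l f (1 - f)). pose proof (Rmin_r f (1 - f)). unfold c. lra. }
  assert (HLAL : (LA <= L)%nat) by (apply INR_le; nra).
  assert (HLB : INR (L - LA) = (1 - f) * INR L) by (rewrite minus_INR by auto; lra).
  split; [exact HLAL|]. split; [apply INR_le; nra|]. split; [apply INR_le; nra|].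
  assert (Hc3 : c <= if Req_EM_T f (1 / 2) then 1 else Rabs (1 - 2 * f)) by apply Rmin_r.
  destruct (Req_EM_T f (1 / 2)) as [E|E].
  - left. apply INR_eq. rewrite E in HLA, HLB. lra.
  - right. destruct (Rlt_le_dec f (1 / 2)).
    + left. apply INR_le. rewrite plus_INR, HLB, HLA.
      rewrite Rabs_right in Hc3 by lra. nra.
    + right. apply INR_le. rewrite plus_INR, HLB, HLA.
      rewrite Rabs_left in Hc3 by lra. nra.
Qed.

Lemma mainTerm_entropy_limit k jj JJ L LA f : 0 < f < 1 -> (0 < L)%nat -> INR LA = f * INR L ->
  mainTerm k jj JJ L f = entropy_limit (qdim k jj) (qdim k JJ) LA (L - LA).
Proof.
  intros Hf HL HLA.
  assert (HL' : 0 < INR L) by (apply lt_0_INR; auto).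
  assert (HLAL : (LA <= L)%nat) by (apply INR_le; nra).
  assert (HLB : INR (L - LA) = (1 - f) * INR L) by (rewrite minus_INR by auto; lra).
  unfold mainTerm, entropy_limit.
  destruct (Rle_dec f (1 / 2)) as [Hle|Hgt]; [destruct (Req_EM_T f (1 / 2)) as [E|E]|].
  - replace (Nat.compare LA (L - LA)) with Eq.
    + rewrite HLA. unfold Rdiv. ring.
    + symmetry. apply Nat.compare_eq_iff, INR_eq. rewrite E in HLA, HLB. lra.
  - replace (Nat.compare LA (L - LA)) with Lt.
    + rewrite HLA. ring.
    + symmetry. apply Nat.compare_lt_iff, INR_lt. nra.
  - replace (Nat.compare LA (L - LA)) with Gt.
    + rewrite HLB. ring.
    + symmetry. apply Nat.compare_gt_iff, INR_lt. nra.
Qed.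

Theorem mainTheorem3 (k jj JJ : nat) (f : R) :
  (2 <= k)%nat -> (0 < jj)%nat -> (jj < k)%nat -> (JJ <= k)%nat ->
  0 < f < 1 ->
  forall eps : R, 0 < eps ->
  exists N : nat, forall L LA : nat,
    (N <= L)%nat -> INR LA = f * INR L -> (0 < Dpaths k jj L JJ)%nat ->
    Rabs (avgEntropy k jj JJ L LA - mainTerm k jj JJ L f) < eps.
Proof.
  intros Hk Hj0 Hjk HJ Hf eps Heps.
  destruct (avgEntropy_eventually_close k jj JJ ltac:(lia) ltac:(lia) HJ (eps / 2))
    as [N HN]; [lra|].
  destruct (proportional_split_large f N Hf) as [N' HN'].
  exists (Nat.max 1 N'). intros L LA HL HLA HD.
  destruct (HN' L LA ltac:(lia) HLA) as [HLAL [HNA [HNB Hgap]]].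
  rewrite (mainTerm_entropy_limit k jj JJ L LA f) by (auto; lia).
  assert (EL : L = (LA + (L - LA))%nat) by lia.
  rewrite EL in HD. rewrite EL at 1.
  apply Rle_lt_trans with (eps / 2); [now apply HN | lra].
Qed.
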